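(* Let $G=G_1+\dots+G_n$ be a disjunctive sum of dicotic nonzugzwang scoring games, each with all terminal positions numbers. Let $m_i=m(G_i)$ and $\sigma=\max_{1\leq i\leq n}\sigma(G_i)$. Then $$\sum_{i=1}^n m_i-\sigma\leq Rs(G)\leq \sum_{i=1}^n m_i\leq Ls(G)\leq\sum_{i=1}^n m_i+\sigma.$$
   Context: A scoring game is $G=\langle G^L\mid G^R\rangle$ with $G^L,G^R$ finite nonempty sets of scoring games or empty sets decorated with a real, $\emptyset^s$; $\langle\emptyset^s\mid\emptyset^s\rangle$ is the number $s$. $Ls(\langle\emptyset^s\mid G^R\rangle)=s$, $Rs(\langle G^L\mid\emptyset^s\rangle)=s$, otherwise $Ls(G)=\max_{G^l\in G^L}Rs(G^l)$, $Rs(G)=\min_{G^r\in G^R}Ls(G^r)$. Disjunctive sum: Left options of $G_1+G_2$ are all $G_1^l+G_2$, $G_1+G_2^l$ (Left side $\emptyset^{\ell_1+\ell_2}$ if neither has Left options), symmetrically for Right; $H+c$ adds the number $c$ to all terminal scores; $nG$ is the sum of $n$ copies. Dicotic: at every position both players have options or neither; nonzugzwang: $Ls(H)\ge Rs(H)$ at every position. Mean: $m(G)=\lim_{n\to\infty}Ls(nG)/n=\lim_{n\to\infty}Rs(nG)/n$ (exists for dicotic nonzugzwang games). Cooling: if $G$ is a number $k$, $G_t=k$, $\sigma(G)=0$; otherwise $\widetilde G_t=\langle \{G^l_t-t\}\mid \{G^r_t+t\}\rangle$, $t_0=\min\{t\ge0: Ls(\widetilde G_t)=Rs(\widetilde G_t)\}$,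 $G_t=\widetilde G_t$ for $t\le t_0$ and the number $Ls(\widetilde G_{t_0})$ for $t>t_0$; $\sigma(G)=t_0$ is the temperature. *)

From mathcomp Require Import all_boot all_order all_algebra.
From mathcomp Require Import all_classical all_reals all_analysis.
Set Implicit Arguments. Unset Strict Implicit. Unset Printing Implicit Defensive.
Import Order.TTheory GRing.Theory Num.Theory numFieldNormedType.Exports.
Local Open Scope ring_scope.
Local Open Scope classical_set_scope.

Section ScoringGames.
Variable R : realType.

(* A scoring game  < G^L | G^R >.  [Gm L l Rr r]: the Left option list L and
   the Right option list Rr.  When L = [::] the Left side is the decorated
   empty set  emptyset^l ; when L <> [::] the decoration l is irrelevant
   (never read).  Likewise for the Right side. *)
Inductive game : Type := Gm of seq game & R & seq game & R.

Definition leftopts (G : game) := let: Gm L _ _ _ := G in L.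
Definition rightopts (G : game) := let: Gm _ _ Rr _ := G in Rr.

Definition gnum (s : R) : game := Gm [::] s [::] s.

Definition is_num (G : game) : bool :=
  let: Gm L l Rr r := G in nilp L && nilp Rr && (l == r).

Fixpoint LRs (G : game) : R * R :=
  let: Gm L l Rr r := G in
  (match L with
   | [::] => l
   | g :: t => foldr (fun h acc => Num.max (LRs h).2 acc) (LRs g).2 t
   end,
   match Rr with
   | [::] => r
   | g :: t => foldr (fun h acc => Num.min (LRs h).1 acc) (LRs g).1 t
   end).

Definition Ls (G : game) : R := (LRs G).1.
Definition Rs (G : game) : R := (LRs G).2.

Fixpoint gsum (G1 G2 : game) {struct G1} : game :=
  let fix aux (G2 : game) : game :=
    let: Gm L1 l1 R1 r1 := G1 in
    let: Gm L2 l2 R2 r2 := G2 in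
    Gm ([seq gsum g G2 | g <- L1] ++ [seq aux g | g <- L2]) (l1 + l2)
       ([seq gsum g G2 | g <- R1] ++ [seq aux g | g <- R2]) (r1 + r2)
  in aux G2.

Fixpoint shift (c : R) (G : game) : game :=
  let: Gm L l Rr r := G in
  Gm [seq shift c g | g <- L] (l + c) [seq shift c g | g <- Rr] (r + c).

Fixpoint gmul (n : nat) (G : game) : game :=
  match n with
  | 0 => gnum 0
  | n'.+1 => if n' is 0 then G else gsum G (gmul n' G)
  end.

Fixpoint sum_games (Gs : seq game) : game :=
  match Gs with
  | [::] => gnum 0
  | [:: g] => g
  | g :: t => gsum g (sum_games t)
  end.

Fixpoint every_position (P : game -> Prop) (G : game) : Prop :=
  let: Gm L l Rr r := G in
  P G /\ foldr (fun g acc => every_position P g /\ acc) True L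
      /\ foldr (fun g acc => every_position P g /\ acc) True Rr.

Definition dicotic (G : game) : Prop :=
  every_position (fun H => nilp (leftopts H) = nilp (rightopts H)) G.

Definition nonzugzwang (G : game) : Prop :=
  every_position (fun H => Rs H <= Ls H) G.

Definition terminal_numbers (G : game) : Prop :=
  every_position (fun H => nilp (leftopts H) && nilp (rightopts H) -> is_num H) G.

Definition mean (G : game) : R := limn (fun n : nat => Ls (gmul n G) / n%:R).

(* cooling: returns (t |-> G_t, sigma(G)).
   t0 = min { t >= 0 | Ls(~G_t) = Rs(~G_t) }, taken as the infimum. *)
Fixpoint coolp (G : game) : (R -> game) * R :=
  let: Gm L l Rr r := G in
  if is_num G then (fun _ => gnum l, 0) else
  let tilde := fun t : R =>
    Gm [seq shift (- t) ((coolp g).1 t) | g <- L] l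
       [seq shift t ((coolp g).1 t) | g <- Rr] r in
  let t0 := inf [set t : R | 0 <= t /\ Ls (tilde t) = Rs (tilde t)] in
  (fun t => if t <= t0 then tilde t else gnum (Ls (tilde t0)), t0).

Definition cool (G : game) (t : R) : game := (coolp G).1 t.
Definition temperature (G : game) : R := (coolp G).2.

End ScoringGames.

From Pilot Require Import Defs.
From mathcomp Require Import all_boot all_order all_algebra.
From mathcomp Require Import all_classical all_reals all_analysis.
From mathcomp Require Import lra zify.
From Stdlib Require Import Permutation.
Import Order.TTheory GRing.Theory Num.Theory numFieldNormedType.Exports.
Local Open Scope ring_scope.
Local Open Scope classical_set_scope.
Set Implicit Arguments. Unset Strict Implicit. Unset Printing Implicit Defensive.

(* Write G_t for G cooled by t.  For dicotic nonzugzwang games H_1, ..., H_k and t >= 0,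
     Ls (sum_i H_i,t) <= Ls (sum_i H_i) <= Ls (sum_i H_i,t) + t,
     Rs (sum_i H_i) <= Rs (sum_i H_i,t) <= Rs (sum_i H_i) + t,
   by induction on the sum.  The inductive step rests on the inequalities
   Ls P + Rs Q <= Ls (P + Q) <= Ls P + Ls Q (and their duals) for sums of such games,
   and on the fact that t |-> Ls G_t is nonincreasing and t |-> Rs G_t nondecreasing,
   both 1-Lipschitz, so that G_t freezes at the first t where they meet.  Above its
   temperature each G_i has frozen to a number v_i, so the scores of the sum lie within
   sigma + e of sum_i v_i for every e > 0.  Applied to n copies of a single game this
   gives Ls (n G) / n -> v, that is v = m(G). *)

Lemma big_Permutation (I V : Type) (idx : V) (op : Monoid.com_law idx) (F : I -> V)
    (s1 s2 : seq I) :
  Permutation s1 s2 -> \big[op/idx]_(i <- s1) F i = \big[op/idx]_(i <- s2) F i.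
Proof.
elim=> [//|x s s' _ IH|x y s|s s' s'' _ IH1 _ IH2]; rewrite ?big_cons.
- by rewrite IH.
- by rewrite Monoid.mulmCA.
- by rewrite IH1.
Qed.

Lemma eq_big_In (I V : Type) (idx : V) (op : V -> V -> V) (F G : I -> V) (s : seq I) :
  (forall i, List.In i s -> F i = G i) ->
  \big[op/idx]_(i <- s) F i = \big[op/idx]_(i <- s) G i.
Proof.
elim: s => [|x s IH] eqFG; first by rewrite !big_nil.
by rewrite !big_cons eqFG ?IH //; [move=> i i_s; apply: eqFG; right|left].
Qed.

Lemma In_nth (T : Type) (x0 x : T) (s : seq T) : List.In x s ->
  exists2 i, (i < size s)%N & nth x0 s i = x.
Proof.
elim: s => [//|y s IH] [<-|/IH[i lt_i <-]]; first by exists 0%N.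
by exists i.+1.
Qed.

Lemma exists_argmax_In (R : realType) (I : Type) (P : I -> Prop) (f : I -> R) (s : seq I) :
  (exists2 i, List.In i s & P i) ->
  exists i, [/\ List.In i s, P i & forall j, List.In j s -> P j -> f j <= f i].
Proof.
elim: s => [[? []]|i s IH] [k k_in Pk].
have [[m [m_in Pm m_max]]|no_m] := EM (exists m, [/\ List.In m s, P m &
    forall j, List.In j s -> P j -> f j <= f m]).
  have [Pi|nPi] := EM (P i); last by exists m; split=> [|//|j [<-//|]]; [right|apply: m_max].
  have [le_im|lt_mi] := leP (f i) (f m).
    by exists m; split=> [|//|j [<-//|]]; [right|apply: m_max].
  exists i; split=> [|//|j [<-//|j_in Pj]]; first by left.
  exact: le_trans (m_max j j_in Pj) (ltW lt_mi).
have Pi : P i.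
  case: k_in Pk => [-> //|k_in Pk]; exfalso; apply: no_m; apply: IH; by exists k.
exists i; split=> [|//|j [<-//|j_in Pj]]; first by left.
by exfalso; apply: no_m; apply: IH; exists j.
Qed.

Section BigMax.
Variables (R : realType) (I : Type) (F : I -> R).

Lemma bigmax_ge0 (s : seq I) : 0 <= \big[Num.max/0]_(i <- s) F i.
Proof. by elim: s => [|i s IH]; rewrite ?big_nil ?big_cons ?le_max ?IH ?orbT. Qed.

Lemma le_bigmax_In (s : seq I) i : List.In i s -> F i <= \big[Num.max/0]_(j <- s) F j.
Proof.
elim: s => [//|j s IH] /= i_in; rewrite big_cons le_max.
by case: i_in => [<-|/IH ->]; rewrite ?lexx ?orbT.
Qed.

End BigMax.

Section FirstZero.
Variables (R : realType) (D : R -> R).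
Hypothesis D_nonincr : forall s t, 0 <= s -> s <= t -> D t <= D s.
Hypothesis D_lipschitz : forall s t, 0 <= s -> s <= t -> D s - 2 * (t - s) <= D t.

Lemma inf_nonneg_set (E : set R) : (forall t, E t -> 0 <= t) -> E !=set0 ->
  [/\ 0 <= inf E, forall e, E e -> inf E <= e
    & forall eps, 0 < eps -> exists2 e, E e & e < inf E + eps].
Proof.
move=> E_ge0 [x Ex]; have lbE : has_lbound E by exists 0 => y /E_ge0.
split; first by apply: lb_le_inf; [exists x|move=> y /E_ge0].
  by move=> e Ee; apply: ge_inf.
by move=> eps eps_gt0; apply: inf_adherent => //; split; [exists x|].
Qed.

Lemma nonpos_at_inf (E : set R) : (forall t, E t -> 0 <= t /\ D t <= 0) -> E !=set0 ->
  D (inf E) <= 0.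
Proof.
move=> E_D E_ne; have [inf_ge0 inf_le inf_adh] := inf_nonneg_set (fun t Et => (E_D t Et).1) E_ne.
rewrite leNgt; apply/negP => D_gt0.
have [e Ee lt_e] := inf_adh (D (inf E) / 4) (divr_gt0 D_gt0 (ltr0n _ 4)).
have := D_lipschitz inf_ge0 (inf_le e Ee); have := (E_D e Ee).2; lra.
Qed.

Lemma first_zero t1 : 0 <= D 0 -> 0 <= t1 -> D t1 < 0 ->
  let t0 := inf [set t | 0 <= t /\ D t = 0] in 0 <= t0 /\ D t0 = 0.
Proof.
move=> D0 t1_ge0 Dt1 t0.
pose N := [set t | 0 <= t /\ D t <= 0].
have N_ne : N !=set0 by exists t1; split=> //; apply: ltW.
have [s_ge0 s_le _] := inf_nonneg_set (fun t (Nt : N t) => Nt.1) N_ne.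
have Ds_le0 : D (inf N) <= 0 by apply: nonpos_at_inf.
have Ds_ge0 : 0 <= D (inf N).
  rewrite leNgt; apply/negP => Ds_lt0; pose eps := - D (inf N) / 4.
  have [s_small|s_large] := lerP (inf N) eps.
    by have := D_lipschitz (lexx 0) s_ge0; rewrite /eps in s_small *; lra.
  have t_notin : ~ N (inf N - eps) by move/s_le; rewrite /eps; lra.
  have t_ge0 : 0 <= inf N - eps by rewrite /eps in s_large *; lra.
  have Dt_gt0 : 0 < D (inf N - eps) by rewrite ltNge; apply/negP => ?; apply: t_notin.
  have le_t : inf N - eps <= inf N by rewrite /eps; lra.
  by have := D_lipschitz t_ge0 le_t; rewrite /eps in Dt_gt0 *; lra.
have Z_s : [set t | 0 <= t /\ D t = 0] (inf N) by split=> //; apply/le_anti/andP.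
have [t0_ge0 t0_le _] := inf_nonneg_set (fun t (Zt : [set t | 0 <= t /\ D t = 0] t) => Zt.1)
  (ex_intro _ _ Z_s).
split=> //; apply/le_anti/andP; split.
  by apply: nonpos_at_inf => [t [? ->]|]; [|exists (inf N)].
by have := D_nonincr t0_ge0 (t0_le _ Z_s); rewrite Z_s.2.
Qed.

End FirstZero.

Lemma limn_div_of_bounded (R : realType) (u : nat -> R) (a C : R) : 0 < C ->
  (forall n, a *+ n <= u n <= a *+ n + C) -> limn (fun n => u n / n%:R) = a.
Proof.
move=> C_gt0 u_bnd; apply: (cvg_lim (@Rhausdorff R)); apply/cvgrPdist_le => e e_gt0.
apply: filterS (nbhs_infty_ger (C / e)) => n le_n.
have n_gt0 : 0 < (n%:R : R) by apply: lt_le_trans le_n; apply: divr_gt0.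
have le_C : C <= n%:R * e by rewrite -ler_pdivrMr.
have /andP[lo hi] := u_bnd n; rewrite -mulr_natr in lo hi.
rewrite distrC ler_distl; apply/andP; split.
  by rewrite ler_pdivlMr //; have := mulr_ge0 (ltW e_gt0) (ltW n_gt0); nra.
by rewrite ler_pdivrMr //; nra.
Qed.

Section Positions.
Variable R : realType.
Local Notation game := (game R).
Local Notation shift := (@Defs.shift R).
Implicit Types (G g h : game) (c : R) (s : seq game).

Fixpoint gsize G : nat :=
  let: Gm L _ Rr _ := G in (sumn (map gsize L) + sumn (map gsize Rr)).+1.

Lemma gsize_le_sumn s g : List.In g s -> (gsize g <= sumn (map gsize s))%N.
Proof.
elim: s => //= h s IH [<-|/IH le_g_s]; first exact: leq_addr.
exact: leq_trans le_g_s (leq_addl _ _).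
Qed.

Lemma gsize_leftopt G g : List.In g (leftopts G) -> (gsize g < gsize G)%N.
Proof. by case: G => L l Rr r /gsize_le_sumn /= le_g; rewrite ltnS (leq_trans le_g) ?leq_addr. Qed.

Lemma gsize_rightopt G g : List.In g (rightopts G) -> (gsize g < gsize G)%N.
Proof. by case: G => L l Rr r /gsize_le_sumn /= le_g; rewrite ltnS (leq_trans le_g) ?leq_addl. Qed.

Lemma game_opts_ind (P : game -> Prop) :
  (forall G, (forall g, List.In g (leftopts G) -> P g) ->
             (forall g, List.In g (rightopts G) -> P g) -> P G) ->
  forall G, P G.
Proof.
move=> IH G; have [n] := ubnP (gsize G); elim: n G => // n IHn G /ltnSE le_G.
apply: IH => g g_opt; apply: IHn.
  exact: leq_trans (gsize_leftopt g_opt) le_G.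
exact: leq_trans (gsize_rightopt g_opt) le_G.
Qed.

Lemma every_positionE (P : game -> Prop) G : every_position P G <->
  [/\ P G, forall g, List.In g (leftopts G) -> every_position P g
         & forall g, List.In g (rightopts G) -> every_position P g].
Proof.
have foldrE s : foldr (fun g acc => every_position P g /\ acc) True s <->
    (forall g, List.In g s -> every_position P g).
  elim: s => /= [|h s ->]; first by split.
  by split=> [[Ph Ps] g [<-|/Ps]|Ps] //; split=> [|g g_s]; apply: Ps; [left|right].
by case: G => L l Rr r /=; rewrite !foldrE; split=> [[? []]|[]].
Qed.

Section FoldrExtremum.
Variables (T : Type) (F : T -> R).

Lemma foldr_max_ub x (xs : seq T) y : List.In y (x :: xs) ->
  F y <= foldr (fun z m => Num.max (F z) m) (F x) xs.
Proof.
elim: xs y => [y [<-|[]] //|z xs IH] y /= y_in; rewrite le_max; apply/orP.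
by case: y_in => [<-|[<-|y_xs]]; [right; apply: IH; left | left | right; apply: IH; right].
Qed.

Lemma foldr_max_attained x (xs : seq T) : exists2 y, List.In y (x :: xs) &
  foldr (fun z m => Num.max (F z) m) (F x) xs = F y.
Proof.
elim: xs => [|z xs [y y_in IH]] /=; first by exists x; [left|].
rewrite IH.
have [_|_] := leP (F z) (F y); first by exists y => //; case: y_in; [left|right; right].
by exists z; [right; left|].
Qed.

Lemma foldr_min_lb x (xs : seq T) y : List.In y (x :: xs) ->
  foldr (fun z m => Num.min (F z) m) (F x) xs <= F y.
Proof.
elim: xs y => [y [<-|[]] //|z xs IH] y /= y_in; rewrite ge_min; apply/orP.
by case: y_in => [<-|[<-|y_xs]]; [right; apply: IH; left | left | right; apply: IH; right].
Qed.

Lemma foldr_min_attained x (xs : seq T) : exists2 y, List.In y (x :: xs) &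
  foldr (fun z m => Num.min (F z) m) (F x) xs = F y.
Proof.
elim: xs => [|z xs [y y_in IH]] /=; first by exists x; [left|].
rewrite IH.
have [_|_] := leP (F z) (F y); first by exists z; [right; left|].
by exists y => //; case: y_in; [left|right; right].
Qed.

End FoldrExtremum.

Lemma Ls_ub G g : List.In g (leftopts G) -> Rs g <= Ls G.
Proof. by case: G => [[|g0 L] l Rr r] //; apply: foldr_max_ub. Qed.

Lemma Ls_attained G : leftopts G <> [::] ->
  exists2 g, List.In g (leftopts G) & Ls G = Rs g.
Proof. by case: G => [[|g0 L] l Rr r] // _; apply: foldr_max_attained. Qed.

Lemma Rs_lb G g : List.In g (rightopts G) -> Rs G <= Ls g.
Proof. by case: G => [L l [|g0 Rr] r] //; apply: foldr_min_lb. Qed.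

Lemma Rs_attained G : rightopts G <> [::] ->
  exists2 g, List.In g (rightopts G) & Rs G = Ls g.
Proof. by case: G => [L l [|g0 Rr] r] // _; apply: foldr_min_attained. Qed.

Lemma leftopts_shift c G : leftopts (shift c G) = map (shift c) (leftopts G).
Proof. by case: G. Qed.

Lemma rightopts_shift c G : rightopts (shift c G) = map (shift c) (rightopts G).
Proof. by case: G. Qed.

Lemma Ls_Rs_shift c G : Ls (shift c G) = Ls G + c /\ Rs (shift c G) = Rs G + c.
Proof.
elim/game_opts_ind: G => G IHL IHR; split; apply/eqP; rewrite eq_le; apply/andP; split.
- case E: (leftopts G) => [|g0 L].
    by case: G E IHL IHR => [[|? ?] l Rr r] //= _ _ _; rewrite lexx.
  have [g' + ->] : exists2 g', List.In g' (leftopts (shift c G)) & Ls (shift c G) = Rs g'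
    by apply: Ls_attained; rewrite leftopts_shift E.
  rewrite leftopts_shift => /List.in_map_iff[g [<- g_opt]].
  by rewrite (IHL g g_opt).2 lerD2r Ls_ub.
- case E: (leftopts G) => [|g0 L].
    by case: G E IHL IHR => [[|? ?] l Rr r] //= _ _ _; rewrite lexx.
  have /Ls_attained[h h_opt ->] : leftopts G <> [::] by rewrite E.
  by rewrite -(IHL h h_opt).2 Ls_ub // leftopts_shift; apply: List.in_map.
- case E: (rightopts G) => [|g0 Rr].
    by case: G E IHL IHR => [L l [|? ?] r] //= _ _ _; rewrite lexx.
  have /Rs_attained[h h_opt ->] : rightopts G <> [::] by rewrite E.
  by rewrite -(IHR h h_opt).1 Rs_lb // rightopts_shift; apply: List.in_map.
- case E: (rightopts G) => [|g0 Rr].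
    by case: G E IHL IHR => [L l [|? ?] r] //= _ _ _; rewrite lexx.
  have [g' + ->] : exists2 g', List.In g' (rightopts (shift c G)) & Rs (shift c G) = Ls g'
    by apply: Rs_attained; rewrite rightopts_shift E.
  rewrite rightopts_shift => /List.in_map_iff[g [<- g_opt]].
  by rewrite (IHR g g_opt).1 lerD2r Rs_lb.
Qed.

Lemma Ls_shift c G : Ls (shift c G) = Ls G + c.
Proof. exact: (Ls_Rs_shift c G).1. Qed.

Lemma Rs_shift c G : Rs (shift c G) = Rs G + c.
Proof. exact: (Ls_Rs_shift c G).2. Qed.

End Positions.

Section DicoticNonzugzwang.
Variable R : realType.
Local Notation game := (game R).
Local Notation shift := (@Defs.shift R).
Implicit Types (G g h : game) (a c : R).

Definition dnz G := dicotic G /\ nonzugzwang G /\ terminal_numbers G.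

Lemma dnzE G : dnz G <->
  [/\ nilp (leftopts G) = nilp (rightopts G), Rs G <= Ls G,
      nilp (leftopts G) && nilp (rightopts G) -> is_num G,
      forall g, List.In g (leftopts G) -> dnz g
    & forall g, List.In g (rightopts G) -> dnz g].
Proof.
rewrite /dnz /dicotic /nonzugzwang /terminal_numbers !every_positionE.
split=> [[[d dL dR] [[n nL nR] [t tL tR]]]|[d n t DL DR]].
  by split=> // g g_opt; do ?split; [exact: dL|exact: nL|exact: tL|exact: dR|exact: nR|exact: tR].
split; [|split]; split=> // g.
- by move/DL=> [].
- by move/DR=> [].
- by move/DL=> [_ []].
- by move/DR=> [_ []].
- by move/DL=> [_ []].
- by move/DR=> [_ []].
Qed.

Lemma dnz_leftopt G g : dnz G -> List.In g (leftopts G) -> dnz g.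
Proof. by case/dnzE=> _ _ _ + _; apply. Qed.

Lemma dnz_rightopt G g : dnz G -> List.In g (rightopts G) -> dnz g.
Proof. by case/dnzE=> _ _ _ _; apply. Qed.

Lemma dnz_Rs_le_Ls G : dnz G -> Rs G <= Ls G.
Proof. by case/dnzE. Qed.

Lemma is_numE G : is_num G -> G = gnum (Ls G).
Proof. by case: G => L l Rr r /andP[/andP[/nilP-> /nilP->] /eqP->]. Qed.

Lemma is_num_opts G : is_num G -> leftopts G = [::] /\ rightopts G = [::].
Proof. by move/is_numE->. Qed.

Lemma dnz_leftopts_nil G : dnz G -> (leftopts G = [::]) = is_num G.
Proof.
case/dnzE=> d _ t _ _; apply/propext; split=> [nilL|/is_num_opts[] //].
by apply: t; rewrite -d andbb; apply/nilP.
Qed.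

Lemma dnz_rightopts_nil G : dnz G -> (rightopts G = [::]) = is_num G.
Proof.
case/dnzE=> d _ t _ _; apply/propext; split=> [nilR|/is_num_opts[] //].
by apply: t; rewrite d andbb; apply/nilP.
Qed.

Lemma dnz_gnum a : dnz (gnum a).
Proof. by apply/dnzE; split=> //=; rewrite eqxx. Qed.

Lemma dnz_shift c G : dnz G -> dnz (shift c G).
Proof.
elim/game_opts_ind: G => G IHL IHR /dnzE[d n t DL DR]; apply/dnzE; split.
- by rewrite leftopts_shift rightopts_shift /nilp !size_map.
- by rewrite Ls_shift Rs_shift lerD2r.
- case: G {IHL IHR d n DL DR} t => L l Rr r /= t; rewrite /nilp !size_map => /t.
  by case/andP=> -> /eqP->; rewrite eqxx.
- rewrite leftopts_shift => _ /List.in_map_iff[g [<- g_opt]].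
  exact: IHL g_opt (DL g g_opt).
- rewrite rightopts_shift => _ /List.in_map_iff[g [<- g_opt]].
  exact: IHR g_opt (DR g g_opt).
Qed.

End DicoticNonzugzwang.

Arguments dnz {R}.

(** * Disjunctive sums *)

Section Sums.
Variable R : realType.
Local Notation game := (game R).
Local Notation shift := (@Defs.shift R).
Implicit Types (A B G g x y : game) (a c : R) (Xs Ys P Q : seq game).

Lemma leftopts_gsum A B :
  leftopts (gsum A B) = [seq gsum g B | g <- leftopts A] ++ [seq gsum A g | g <- leftopts B].
Proof. by case: A => ? ? ? ?; case: B. Qed.

Lemma rightopts_gsum A B :
  rightopts (gsum A B) = [seq gsum g B | g <- rightopts A] ++ [seq gsum A g | g <- rightopts B].
Proof. by case: A => ? ? ? ?; case: B. Qed.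

Lemma gsumE L1 l1 R1 r1 L2 l2 R2 r2 :
  gsum (Gm L1 l1 R1 r1) (Gm L2 l2 R2 r2) =
  Gm ([seq gsum g (Gm L2 l2 R2 r2) | g <- L1] ++ [seq gsum (Gm L1 l1 R1 r1) g | g <- L2])
     (l1 + l2)
     ([seq gsum g (Gm L2 l2 R2 r2) | g <- R1] ++ [seq gsum (Gm L1 l1 R1 r1) g | g <- R2])
     (r1 + r2).
Proof. by []. Qed.

Lemma gsum_gnum a B : gsum (gnum a) B = shift a B.
Proof.
elim/game_opts_ind: B => -[L l Rr r] IHL IHR.
rewrite /gnum gsumE /= (addrC a l) (addrC a r).
by congr Gm; apply: List.map_ext_in => g g_opt; [rewrite -IHL|rewrite -IHR].
Qed.

Lemma gsum_shift c A B : gsum (shift c A) B = shift c (gsum A B).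
Proof.
elim/game_opts_ind: A B => -[LA la RA ra] IHLA IHRA.
elim/game_opts_ind=> -[LB lb RB rb] IHLB IHRB.
rewrite [shift c (Gm LA _ _ _)]/= !gsumE /= !map_cat -!map_comp.
rewrite (addrAC la c lb) (addrAC ra c rb); congr Gm; congr cat.
all: apply: List.map_ext_in => g g_opt /=.
- by rewrite IHLA.
- by rewrite -IHLB.
- by rewrite IHRA.
- by rewrite -IHRB.
Qed.

Lemma Ls_gsum_nil A B : leftopts A = [::] -> leftopts B = [::] ->
  Ls (gsum A B) = Ls A + Ls B.
Proof. by case: A => [[|? ?] ? ? ?] //; case: B => [[|? ?] ? ? ?]. Qed.

Lemma Rs_gsum_nil A B : rightopts A = [::] -> rightopts B = [::] ->
  Rs (gsum A B) = Rs A + Rs B.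
Proof. by case: A => [? ? [|? ?] ?] //; case: B => [? ? [|? ?] ?]. Qed.

Lemma sum_games_cons2 x y Xs : sum_games [:: x, y & Xs] = gsum x (sum_games (y :: Xs)).
Proof. by []. Qed.

Lemma Ls_Rs_sum_shift c x Q :
  Ls (sum_games (shift c x :: Q)) = Ls (sum_games (x :: Q)) + c /\
  Rs (sum_games (shift c x :: Q)) = Rs (sum_games (x :: Q)) + c.
Proof.
case: Q => [|y Q]; first exact: Ls_Rs_shift.
by rewrite !sum_games_cons2 gsum_shift; apply: Ls_Rs_shift.
Qed.

Lemma Ls_Rs_sum_gnum a Q :
  Ls (sum_games (gnum a :: Q)) = Ls (sum_games Q) + a /\
  Rs (sum_games (gnum a :: Q)) = Rs (sum_games Q) + a.
Proof.
case: Q => [|y Q]; first by rewrite /= add0r.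
by rewrite sum_games_cons2 gsum_gnum; apply: Ls_Rs_shift.
Qed.

(* A move in the sum is a move in exactly one component; [o] selects the player. *)
Inductive sum_step (o : game -> seq game) : seq game -> seq game -> Prop :=
| sum_step_head x x' Xs : List.In x' (o x) -> sum_step o (x :: Xs) (x' :: Xs)
| sum_step_tail x Xs Ys : sum_step o Xs Ys -> sum_step o (x :: Xs) (x :: Ys).

Definition additive_opts (o : game -> seq game) :=
  (forall A B, o (gsum A B) = [seq gsum g B | g <- o A] ++ [seq gsum A g | g <- o B]) /\
  o (gnum 0) = [::].

Lemma additive_leftopts : additive_opts (@leftopts R).
Proof. by split; [exact: leftopts_gsum|]. Qed.

Lemma additive_rightopts : additive_opts (@rightopts R).
Proof. by split; [exact: rightopts_gsum|]. Qed.

Lemma sum_step_nil o Ys : ~ sum_step o [::] Ys.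
Proof. by move=> st; inversion st. Qed.

Lemma sum_step_cons o Xs Ys : sum_step o Xs Ys -> exists y Ys', Ys = y :: Ys'.
Proof. by case=> [x x' ? _|x ? Ys' _]; do 2 eexists. Qed.

Lemma In_opts_sum_games o : additive_opts o -> forall Xs Y,
  List.In Y (o (sum_games Xs)) <-> exists2 Ys, sum_step o Xs Ys & Y = sum_games Ys.
Proof.
move=> [gsum_opts gnum_opts]; elim=> [|x [|y Xs] IH] Y.
- by rewrite /= gnum_opts; split=> // [[Ys /sum_step_nil]].
- split=> [Y_opt|[Ys st ->]]; first by exists [:: Y] => //; apply: sum_step_head.
  by inversion st as [? ? ? ?|? ? ? st']; [|case: (sum_step_nil st')].
rewrite sum_games_cons2 gsum_opts List.in_app_iff; split.
- case=> /List.in_map_iff[g [<- g_opt]].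
    by exists [:: g, y & Xs] => //; apply: sum_step_head.
  have [Ys st ->] := (IH g).1 g_opt.
  have [y' [Ys' eYs]] := sum_step_cons st; subst Ys.
  by exists [:: x, y' & Ys'] => //; apply: sum_step_tail.
- case=> Ys st ->; inversion st as [? x' ? x'_opt|? ? Ys' st']; subst.
    by left; exact: (List.in_map (fun g => gsum g _) _ _ x'_opt).
  have [y' [Ys'' eYs]] := sum_step_cons st'; subst Ys'.
  by right; rewrite sum_games_cons2; apply: List.in_map; apply/IH; exists (y' :: Ys'').
Qed.

Definition no_opts (o : game -> seq game) Xs := forall x, List.In x Xs -> o x = [::].

Lemma no_opts_cons o x Xs : no_opts o (x :: Xs) -> o x = [::] /\ no_opts o Xs.
Proof. by move=> no; split=> [|y y_in]; apply: no; [left|right]. Qed.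

Lemma no_opts_or_sum_step o Xs : no_opts o Xs \/ exists Ys, sum_step o Xs Ys.
Proof.
elim: Xs => [|x Xs [no|[Ys st]]]; first by left.
- case E: (o x) => [|x' opts]; first by left=> z [<-|/no].
  by right; exists (x' :: Xs); apply: sum_step_head; rewrite E; left.
- by right; exists (x :: Ys); apply: sum_step_tail.
Qed.

Lemma opts_sum_games_nil o Xs : additive_opts o -> no_opts o Xs -> o (sum_games Xs) = [::].
Proof.
move=> [gsum_opts gnum_opts]; elim: Xs => [|x [|y Xs] IH] // /no_opts_cons[ox no]; first exact: ox.
by rewrite sum_games_cons2 gsum_opts ox IH.
Qed.

Lemma Ls_sum_no_opts Xs : no_opts (@leftopts R) Xs ->
  Ls (sum_games Xs) = \sum_(x <- Xs) Ls x.
Proof.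
elim: Xs => [|x [|y Xs] IH] no; first by rewrite big_nil.
  by rewrite big_seq1.
have [x_nil no'] := no_opts_cons no.
rewrite sum_games_cons2 big_cons Ls_gsum_nil ?IH //.
exact: opts_sum_games_nil additive_leftopts no'.
Qed.

Lemma Rs_sum_no_opts Xs : no_opts (@rightopts R) Xs ->
  Rs (sum_games Xs) = \sum_(x <- Xs) Rs x.
Proof.
elim: Xs => [|x [|y Xs] IH] no; first by rewrite big_nil.
  by rewrite big_seq1.
have [x_nil no'] := no_opts_cons no.
rewrite sum_games_cons2 big_cons Rs_gsum_nil ?IH //.
exact: opts_sum_games_nil additive_rightopts no'.
Qed.

Lemma Ls_sum_ub Xs Ys : sum_step (@leftopts R) Xs Ys ->
  Rs (sum_games Ys) <= Ls (sum_games Xs).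
Proof. by move=> st; apply: Ls_ub; apply/(In_opts_sum_games additive_leftopts); exists Ys. Qed.

Lemma Rs_sum_lb Xs Ys : sum_step (@rightopts R) Xs Ys ->
  Rs (sum_games Xs) <= Ls (sum_games Ys).
Proof. by move=> st; apply: Rs_lb; apply/(In_opts_sum_games additive_rightopts); exists Ys. Qed.

Lemma Ls_sum_attained Xs Ys0 : sum_step (@leftopts R) Xs Ys0 ->
  exists2 Ys, sum_step (@leftopts R) Xs Ys & Ls (sum_games Xs) = Rs (sum_games Ys).
Proof.
move=> st; have [|g g_opt ->] := @Ls_attained _ (sum_games Xs).
  have : List.In (sum_games Ys0) (leftopts (sum_games Xs)).
    by apply/(In_opts_sum_games additive_leftopts); exists Ys0.
  by case: (leftopts _).
by have [Ys st' ->] := (In_opts_sum_games additive_leftopts _ _).1 g_opt; exists Ys.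
Qed.

Lemma Rs_sum_attained Xs Ys0 : sum_step (@rightopts R) Xs Ys0 ->
  exists2 Ys, sum_step (@rightopts R) Xs Ys & Rs (sum_games Xs) = Ls (sum_games Ys).
Proof.
move=> st; have [|g g_opt ->] := @Rs_attained _ (sum_games Xs).
  have : List.In (sum_games Ys0) (rightopts (sum_games Xs)).
    by apply/(In_opts_sum_games additive_rightopts); exists Ys0.
  by case: (rightopts _).
by have [Ys st' ->] := (In_opts_sum_games additive_rightopts _ _).1 g_opt; exists Ys.
Qed.

Lemma sum_step_split o Xs Ys : sum_step o Xs Ys ->
  exists P x x' Q, [/\ Xs = P ++ x :: Q, Ys = P ++ x' :: Q & List.In x' (o x)].
Proof.
elim=> [x x' {}Xs x'_opt|x {}Xs {}Ys _ [P [y [y' [Q [-> -> y'_opt]]]]]].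
  by exists [::], x, x', Xs.
by exists (x :: P), y, y', Q.
Qed.

Lemma sum_step_mid o P x x' Q : List.In x' (o x) ->
  sum_step o (P ++ x :: Q) (P ++ x' :: Q).
Proof. by move=> x'_opt; elim: P => [|y P IH] /=; constructor. Qed.

Lemma sum_step_catl o P P' Q : sum_step o P P' -> sum_step o (P ++ Q) (P' ++ Q).
Proof. by elim=> *; constructor. Qed.

Lemma sum_step_catP o P Q Ys : sum_step o (P ++ Q) Ys ->
  (exists2 P', sum_step o P P' & Ys = P' ++ Q) \/
  (exists2 Q', sum_step o Q Q' & Ys = P ++ Q').
Proof.
elim: P Ys => [|x P IH] Ys /= st; first by right; exists Ys.
inversion st as [? x' ? x'_opt|? ? Ys' st']; subst.
  by left; exists (x' :: P) => //; constructor.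
case: (IH _ st') => [[P' stP ->]|[Q' stQ ->]]; last by right; exists Q'.
by left; exists (x :: P') => //; constructor.
Qed.

Lemma no_opts_catl o P Q : no_opts o (P ++ Q) -> no_opts o P.
Proof. by move=> no x x_in; apply: no; apply/List.in_app_iff; left. Qed.

End Sums.

Section Permutations.
Variable R : realType.
Local Notation game := (game R).
Local Notation shift := (@Defs.shift R).
Implicit Types (x y : game) (a c : R) (Xs Ys P Q : seq game).

Definition lsize Xs := (\sum_(x <- Xs) gsize x)%N.

Lemma lsize_cons x Xs : lsize (x :: Xs) = (gsize x + lsize Xs)%N.
Proof. exact: big_cons. Qed.

Lemma lsize_Permutation Xs Ys : Permutation Xs Ys -> lsize Xs = lsize Ys.
Proof. exact: big_Permutation. Qed.

Lemma lsize_sum_step (o : game -> seq game) Xs Ys :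
  (forall x x', List.In x' (o x) -> (gsize x' < gsize x)%N) ->
  sum_step o Xs Ys -> (lsize Ys < lsize Xs)%N.
Proof.
move=> o_dec; elim=> [x x' {}Xs x'_opt|x {}Xs {}Ys _ IH]; rewrite /lsize !big_cons.
  by rewrite ltn_add2r; apply: o_dec.
by rewrite ltn_add2l.
Qed.

Lemma Permutation_sum_step o Xs Xs' Ys : Permutation Xs Xs' -> sum_step o Xs Ys ->
  exists2 Ys', sum_step o Xs' Ys' & Permutation Ys Ys'.
Proof.
move=> pX; elim: pX Ys => [|x l l' pl IH|x y l|l l' l'' _ IH1 _ IH2] Ys st.
- by case: (sum_step_nil st).
- inversion st as [? x' ? x'_opt|? ? Ys' st']; subst.
    by exists (x' :: l'); [apply: sum_step_head|apply: perm_skip].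
  have [Ys'' st'' p''] := IH _ st'.
  by exists (x :: Ys''); [apply: sum_step_tail|apply: perm_skip].
- inversion st as [? y' ? y'_opt|? ? Ys' st']; subst.
    by exists [:: x, y' & l]; [do 2 constructor|apply: perm_swap].
  inversion st' as [? x' ? x'_opt|? ? Ys'' st'']; subst.
    by exists [:: x', y & l]; [constructor|apply: perm_swap].
  by exists [:: x, y & Ys'']; [do 2 apply: sum_step_tail|apply: perm_swap].
- have [Ys1 st1 p1] := IH1 _ st.
  have [Ys2 st2 p2] := IH2 _ st1.
  by exists Ys2 => //; apply: perm_trans p1 p2.
Qed.

Lemma Ls_Rs_sum_Permutation Xs Ys : Permutation Xs Ys ->
  Ls (sum_games Xs) = Ls (sum_games Ys) /\ Rs (sum_games Xs) = Rs (sum_games Ys).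
Proof.
have [n] := ubnP (lsize Xs); elim: n Xs Ys => // n IH.
suff le_perm Xs Ys : (lsize Xs < n.+1)%N -> Permutation Xs Ys ->
    Ls (sum_games Xs) <= Ls (sum_games Ys) /\ Rs (sum_games Ys) <= Rs (sum_games Xs).
  move=> Xs Ys lt_Xs pXY; have [leL geR] := le_perm _ _ lt_Xs pXY.
  have lt_Ys : (lsize Ys < n.+1)%N by rewrite -(lsize_Permutation pXY).
  have [geL leR] := le_perm _ _ lt_Ys (Permutation_sym pXY).
  by split; apply/le_anti/andP.
move=> lt_Xs pXY; split.
- case: (no_opts_or_sum_step (@leftopts R) Xs) => [no|[Xs0 st0]].
    have no' : no_opts (@leftopts R) Ys.
      by move=> y /(Permutation_in _ (Permutation_sym pXY)); apply: no.
    by rewrite !Ls_sum_no_opts // (big_Permutation _ _ pXY).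
  have [Xs' st ->] := Ls_sum_attained st0.
  have [Ys' st' pXY'] := Permutation_sum_step pXY st.
  rewrite (IH Xs' Ys' _ pXY').2; first exact: Ls_sum_ub st'.
  exact: leq_trans (lsize_sum_step (@gsize_leftopt R) st) _.
- case: (no_opts_or_sum_step (@rightopts R) Xs) => [no|[Xs0 st0]].
    have no' : no_opts (@rightopts R) Ys.
      by move=> y /(Permutation_in _ (Permutation_sym pXY)); apply: no.
    by rewrite !Rs_sum_no_opts // (big_Permutation _ _ pXY).
  have [Xs' st ->] := Rs_sum_attained st0.
  have [Ys' st' pXY'] := Permutation_sum_step pXY st.
  rewrite (IH Xs' Ys' _ pXY').1; first exact: Rs_sum_lb st'.
  exact: leq_trans (lsize_sum_step (@gsize_rightopt R) st) _.
Qed.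

Lemma Ls_Rs_sum_front P x Q :
  Ls (sum_games (P ++ x :: Q)) = Ls (sum_games (x :: P ++ Q)) /\
  Rs (sum_games (P ++ x :: Q)) = Rs (sum_games (x :: P ++ Q)).
Proof. by apply: Ls_Rs_sum_Permutation; apply/Permutation_sym/Permutation_middle. Qed.

Lemma Ls_Rs_sum_shift_mid c P x Q :
  Ls (sum_games (P ++ shift c x :: Q)) = Ls (sum_games (P ++ x :: Q)) + c /\
  Rs (sum_games (P ++ shift c x :: Q)) = Rs (sum_games (P ++ x :: Q)) + c.
Proof.
have [-> ->] := Ls_Rs_sum_front P (shift c x) Q.
have [-> ->] := Ls_Rs_sum_front P x Q.
exact: Ls_Rs_sum_shift.
Qed.

Lemma Ls_Rs_sum_gnum_mid a P Q :
  Ls (sum_games (P ++ gnum a :: Q)) = Ls (sum_games (P ++ Q)) + a /\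
  Rs (sum_games (P ++ gnum a :: Q)) = Rs (sum_games (P ++ Q)) + a.
Proof. by have [-> ->] := Ls_Rs_sum_front P (gnum a) Q; apply: Ls_Rs_sum_gnum. Qed.

End Permutations.

(** * Sums of dicotic nonzugzwang games *)

Section DnzSums.
Variable R : realType.
Local Notation game := (game R).
Implicit Types (o : game -> seq game) (x y : game) (Xs Ys P Q : seq game).

Lemma Forall_dnz_sum_step o Xs Ys :
  (forall x x', dnz x -> List.In x' (o x) -> dnz x') ->
  List.Forall dnz Xs -> sum_step o Xs Ys -> List.Forall dnz Ys.
Proof.
move=> o_dnz DXs st; elim: st DXs => [x x' {}Xs x'_opt|x {}Xs {}Ys _ IH].
  by case/List.Forall_cons_iff=> Dx DXs; constructor=> //; apply: o_dnz x'_opt.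
by case/List.Forall_cons_iff=> Dx DXs; constructor=> //; apply: IH.
Qed.

Lemma Forall_dnz_sum_step_left Xs Ys : List.Forall dnz Xs ->
  sum_step (@leftopts R) Xs Ys -> List.Forall dnz Ys.
Proof. exact: Forall_dnz_sum_step (@dnz_leftopt R). Qed.

Lemma Forall_dnz_sum_step_right Xs Ys : List.Forall dnz Xs ->
  sum_step (@rightopts R) Xs Ys -> List.Forall dnz Ys.
Proof. exact: Forall_dnz_sum_step (@dnz_rightopt R). Qed.

Lemma dnz_no_opts Xs : List.Forall dnz Xs ->
  no_opts (@leftopts R) Xs <-> no_opts (@rightopts R) Xs.
Proof.
move/List.Forall_forall=> DXs.
split=> no x x_in; have Dx := DXs x x_in; move: (no x x_in).
  by rewrite dnz_leftopts_nil // dnz_rightopts_nil.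
by rewrite dnz_rightopts_nil // dnz_leftopts_nil.
Qed.

Lemma dnz_no_opts_is_num x Xs : List.Forall dnz Xs -> no_opts (@leftopts R) Xs ->
  List.In x Xs -> x = gnum (Ls x).
Proof.
move=> /List.Forall_forall DXs no x_in; apply: is_numE.
by rewrite -(dnz_leftopts_nil (DXs x x_in)) no.
Qed.

Lemma Ls_Rs_sum_cat_numbers P Q : List.Forall dnz P -> no_opts (@leftopts R) P ->
  Ls (sum_games (P ++ Q)) = Ls (sum_games P) + Ls (sum_games Q) /\
  Rs (sum_games (P ++ Q)) = Rs (sum_games P) + Rs (sum_games Q).
Proof.
elim: P => [|x P IH] DP no; first by rewrite cat0s /= !add0r.
have -> : x = gnum (Ls x) by apply: dnz_no_opts_is_num DP no _; left.
have [_ no'] := no_opts_cons no.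
have [IHL IHR] := IH (List.Forall_inv_tail DP) no'.
have [L1 R1] := Ls_Rs_sum_gnum (Ls x) (P ++ Q).
have [L2 R2] := Ls_Rs_sum_gnum (Ls x) P.
by rewrite cat_cons L1 R1 L2 R2 IHL IHR; split; rewrite addrAC.
Qed.

Lemma Ls_eq_Rs_sum_numbers Xs : List.Forall dnz Xs -> no_opts (@leftopts R) Xs ->
  Ls (sum_games Xs) = Rs (sum_games Xs).
Proof.
move=> DXs no; rewrite Ls_sum_no_opts // Rs_sum_no_opts; last exact/(dnz_no_opts DXs).
by apply: eq_big_In => x x_in; rewrite {2}(dnz_no_opts_is_num DXs no x_in).
Qed.

End DnzSums.

Section SumInequalities.
Variable R : realType.
Local Notation game := (game R).
Implicit Types (q x : game) (P Q Xs : seq game).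

Definition sum_cat_bounds P Q := [/\
  Ls (sum_games P) + Rs (sum_games Q) <= Ls (sum_games (P ++ Q)),
  Rs (sum_games P) + Rs (sum_games Q) <= Rs (sum_games (P ++ Q)),
  Rs (sum_games (P ++ Q)) <= Rs (sum_games P) + Ls (sum_games Q) &
  Ls (sum_games (P ++ Q)) <= Ls (sum_games P) + Ls (sum_games Q)].

Section InductionStep.
Variable n : nat.
Hypothesis IH : forall P Q, List.Forall dnz P -> List.Forall dnz Q ->
  (lsize P + lsize Q < n)%N -> sum_cat_bounds P Q.

Lemma sum_nonzugzwang_step Q : (lsize Q <= n)%N -> List.Forall dnz Q ->
  Rs (sum_games Q) <= Ls (sum_games Q).
Proof.
move=> le_Q DQ.
case: (no_opts_or_sum_step (@leftopts R) Q) => [no|[Q0 st0]].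
  by rewrite (Ls_eq_Rs_sum_numbers DQ no).
(* Bring a component with a left option to the front; being dicotic, it also has a
   right option, one of which realises [Rs q]. *)
have [P0 [q [q' [Q1 [eQ _ q'_opt]]]]] := sum_step_split st0.
have pQ : Permutation Q (q :: P0 ++ Q1).
  by rewrite eQ; apply/Permutation_sym/Permutation_middle.
have [-> ->] := Ls_Rs_sum_Permutation pQ.
move: (P0 ++ Q1) pQ => rest pQ.
have /List.Forall_cons_iff[Dq Drest] := Permutation_Forall pQ DQ.
have le_rest : (gsize q + lsize rest <= n)%N by rewrite -lsize_cons -(lsize_Permutation pQ).
have [q'' q''_opt Rs_q] : exists2 q'', List.In q'' (rightopts q) & Rs q = Ls q''.
  apply: Rs_attained; rewrite dnz_rightopts_nil // -dnz_leftopts_nil //.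
  by case: (leftopts q) q'_opt.
have Rs_le : Rs (sum_games (q :: rest)) <= Rs q + Ls (sum_games rest).
  apply: le_trans (Rs_sum_lb (sum_step_head rest q''_opt)) _.
  have Dq'' : List.Forall dnz [:: q''] by constructor=> //; apply: dnz_rightopt Dq q''_opt.
  have lt : (lsize [:: q''] + lsize rest < n)%N.
    by rewrite lsize_cons; move: (gsize_rightopt q''_opt) le_rest; rewrite /lsize big_nil; lia.
  by have [_ _ _ bnd] := IH Dq'' Drest lt; rewrite Rs_q.
have Ls_ge : Rs q + Ls (sum_games rest) <= Ls (sum_games (q :: rest)).
  case: (no_opts_or_sum_step (@leftopts R) rest) => [no|[r0 st_r0]].
    have [-> _] := Ls_Rs_sum_Permutation (Permutation_app_comm [:: q] rest).
    rewrite (Ls_Rs_sum_cat_numbers [:: q] Drest no).1 addrC lerD2l.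
    exact: dnz_Rs_le_Ls.
  have [r' st_r' ->] := Ls_sum_attained st_r0.
  apply: le_trans (Ls_sum_ub (sum_step_tail q st_r')).
  have Dq1 : List.Forall dnz [:: q] by constructor.
  have lt : (lsize [:: q] + lsize r' < n)%N.
    by rewrite lsize_cons; move: (lsize_sum_step (@gsize_leftopt R) st_r') le_rest;
      rewrite /lsize big_nil; lia.
  by have [_ bnd _ _] := IH Dq1 (Forall_dnz_sum_step_left Drest st_r') lt.
exact: le_trans Rs_le Ls_ge.
Qed.

Section Bounds.
Variables P Q : seq game.
Hypotheses (DP : List.Forall dnz P) (DQ : List.Forall dnz Q) (le_PQ : (lsize P + lsize Q <= n)%N).

Let nzQ : Rs (sum_games Q) <= Ls (sum_games Q).
Proof. by apply: sum_nonzugzwang_step DQ; apply: leq_trans le_PQ; apply: leq_addl. Qed.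

Let IH_stepP o P' : (forall x x', List.In x' (o x) -> (gsize x' < gsize x)%N) ->
  sum_step o P P' -> List.Forall dnz P' -> sum_cat_bounds P' Q.
Proof. by move=> o_dec st DP'; apply: IH DP' DQ _; move: (lsize_sum_step o_dec st); lia. Qed.

Let IH_stepQ o Q' : (forall x x', List.In x' (o x) -> (gsize x' < gsize x)%N) ->
  sum_step o Q Q' -> List.Forall dnz Q' -> sum_cat_bounds Q' P.
Proof. by move=> o_dec st DQ'; apply: IH DQ' DP _; move: (lsize_sum_step o_dec st); lia. Qed.

Lemma Ls_sum_cat_ge_step :
  Ls (sum_games P) + Rs (sum_games Q) <= Ls (sum_games (P ++ Q)).
Proof.
case: (no_opts_or_sum_step (@leftopts R) P) => [no|[P0 st0]].
  by rewrite (Ls_Rs_sum_cat_numbers Q DP no).1 lerD2l; apply: nzQ.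
have [P' st ->] := Ls_sum_attained st0.
apply: le_trans (Ls_sum_ub (sum_step_catl Q st)).
by have [_ bnd _ _] := IH_stepP (@gsize_leftopt R) st (Forall_dnz_sum_step_left DP st).
Qed.

Lemma Rs_sum_cat_le_step :
  Rs (sum_games (P ++ Q)) <= Rs (sum_games P) + Ls (sum_games Q).
Proof.
case: (no_opts_or_sum_step (@rightopts R) P) => [no|[P0 st0]].
  have noL : no_opts (@leftopts R) P by apply/(dnz_no_opts DP).
  by rewrite (Ls_Rs_sum_cat_numbers Q DP noL).2 lerD2l; apply: nzQ.
have [P' st ->] := Rs_sum_attained st0.
apply: le_trans (Rs_sum_lb (sum_step_catl Q st)) _.
by have [_ _ _ bnd] := IH_stepP (@gsize_rightopt R) st (Forall_dnz_sum_step_right DP st).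
Qed.

Lemma Rs_sum_cat_ge_step :
  Rs (sum_games P) + Rs (sum_games Q) <= Rs (sum_games (P ++ Q)).
Proof.
case: (no_opts_or_sum_step (@rightopts R) (P ++ Q)) => [no|[Y0 st0]].
  have noL : no_opts (@leftopts R) P by apply/(dnz_no_opts DP); apply: no_opts_catl no.
  by rewrite (Ls_Rs_sum_cat_numbers Q DP noL).2.
have [Y st ->] := Rs_sum_attained st0.
case: (sum_step_catP st) => [[P' stP ->]|[Q' stQ ->]].
  have [bnd _ _ _] := IH_stepP (@gsize_rightopt R) stP (Forall_dnz_sum_step_right DP stP).
  by have := Rs_sum_lb stP; lra.
have [<- _] := Ls_Rs_sum_Permutation (Permutation_app_comm Q' P).
have [bnd _ _ _] := IH_stepQ (@gsize_rightopt R) stQ (Forall_dnz_sum_step_right DQ stQ).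
by have := Rs_sum_lb stQ; lra.
Qed.

Lemma Ls_sum_cat_le_step :
  Ls (sum_games (P ++ Q)) <= Ls (sum_games P) + Ls (sum_games Q).
Proof.
case: (no_opts_or_sum_step (@leftopts R) (P ++ Q)) => [no|[Y0 st0]].
  by rewrite (Ls_Rs_sum_cat_numbers Q DP (no_opts_catl no)).1.
have [Y st ->] := Ls_sum_attained st0.
case: (sum_step_catP st) => [[P' stP ->]|[Q' stQ ->]].
  have [_ _ bnd _] := IH_stepP (@gsize_leftopt R) stP (Forall_dnz_sum_step_left DP stP).
  by have := Ls_sum_ub stP; lra.
have [_ <-] := Ls_Rs_sum_Permutation (Permutation_app_comm Q' P).
have [_ _ bnd _] := IH_stepQ (@gsize_leftopt R) stQ (Forall_dnz_sum_step_left DQ stQ).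
by have := Ls_sum_ub stQ; lra.
Qed.

End Bounds.

End InductionStep.

Lemma sum_cat_bounds_dnz P Q : List.Forall dnz P -> List.Forall dnz Q -> sum_cat_bounds P Q.
Proof.
move=> DP DQ; have [n] := ubnP (lsize P + lsize Q).
elim: n P Q DP DQ => // n IH P Q DP DQ /ltnSE le_PQ.
have LsRs_le := Ls_sum_cat_ge_step IH DP DQ le_PQ.
have RsRs_le := Rs_sum_cat_ge_step IH DP DQ le_PQ.
have le_RsLs := Rs_sum_cat_le_step IH DP DQ le_PQ.
by have le_LsLs := Ls_sum_cat_le_step IH DP DQ le_PQ.
Qed.

Section Consequences.
Variables P Q : seq game.
Hypotheses (DP : List.Forall dnz P) (DQ : List.Forall dnz Q).

Lemma Ls_sum_cat_ge : Ls (sum_games P) + Rs (sum_games Q) <= Ls (sum_games (P ++ Q)).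
Proof. by case: (sum_cat_bounds_dnz DP DQ). Qed.

Lemma Rs_sum_cat_ge : Rs (sum_games P) + Rs (sum_games Q) <= Rs (sum_games (P ++ Q)).
Proof. by case: (sum_cat_bounds_dnz DP DQ). Qed.

Lemma Rs_sum_cat_le : Rs (sum_games (P ++ Q)) <= Rs (sum_games P) + Ls (sum_games Q).
Proof. by case: (sum_cat_bounds_dnz DP DQ). Qed.

Lemma Ls_sum_cat_le : Ls (sum_games (P ++ Q)) <= Ls (sum_games P) + Ls (sum_games Q).
Proof. by case: (sum_cat_bounds_dnz DP DQ). Qed.

End Consequences.

Lemma sum_Rs_le_Rs_sum Xs : List.Forall dnz Xs -> \sum_(x <- Xs) Rs x <= Rs (sum_games Xs).
Proof.
elim: Xs => [|x Xs IH] DXs; first by rewrite big_nil.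
have /List.Forall_cons_iff[Dx DXs'] := DXs; have Dx1 : List.Forall dnz [:: x] by constructor.
rewrite big_cons; apply: le_trans (Rs_sum_cat_ge Dx1 DXs').
by apply: lerD; [exact: lexx|exact: IH].
Qed.

Lemma Ls_sum_le_sum_Ls Xs : List.Forall dnz Xs -> Ls (sum_games Xs) <= \sum_(x <- Xs) Ls x.
Proof.
elim: Xs => [|x Xs IH] DXs; first by rewrite big_nil.
have /List.Forall_cons_iff[Dx DXs'] := DXs; have Dx1 : List.Forall dnz [:: x] by constructor.
rewrite big_cons; apply: le_trans (Ls_sum_cat_le Dx1 DXs') _.
by apply: lerD; [exact: lexx|exact: IH].
Qed.

Lemma sum_Ls_le_Ls_sum Xs : List.Forall dnz Xs -> (forall x, List.In x Xs -> Ls x = Rs x) ->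
  \sum_(x <- Xs) Ls x <= Ls (sum_games Xs).
Proof.
case: Xs => [|x Xs] DXs settled; first by rewrite big_nil.
have /List.Forall_cons_iff[Dx DXs'] := DXs; have Dx1 : List.Forall dnz [:: x] by constructor.
rewrite big_cons; apply: le_trans (Ls_sum_cat_ge Dx1 DXs'); apply: lerD => //.
rewrite (eq_big_In _ _ (fun y y_in => settled y (or_intror y_in))).
exact: sum_Rs_le_Rs_sum.
Qed.

Lemma Rs_sum_le_sum_Rs Xs : List.Forall dnz Xs -> (forall x, List.In x Xs -> Ls x = Rs x) ->
  Rs (sum_games Xs) <= \sum_(x <- Xs) Rs x.
Proof.
case: Xs => [|x Xs] DXs settled; first by rewrite big_nil.
have /List.Forall_cons_iff[Dx DXs'] := DXs; have Dx1 : List.Forall dnz [:: x] by constructor.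
rewrite big_cons; apply: le_trans (Rs_sum_cat_le Dx1 DXs') _; apply: lerD => //.
rewrite -(eq_big_In _ _ (fun y y_in => settled y (or_intror y_in))).
exact: Ls_sum_le_sum_Ls.
Qed.

End SumInequalities.

(** * Cooling *)

Section Cooling.
Variable R : realType.
Local Notation game := (game R).
Local Notation shift := (@Defs.shift R).
Implicit Types (G g h : game) (a s t : R).

Definition tilde_cool G t : game := let: Gm L l Rr r := G in
  Gm [seq shift (- t) (cool g t) | g <- L] l [seq shift t (cool g t) | g <- Rr] r.

Definition freezing_point G :=
  inf [set t : R | 0 <= t /\ Ls (tilde_cool G t) = Rs (tilde_cool G t)].

Definition frozen_value G :=
  if is_num G then Ls G else Ls (tilde_cool G (freezing_point G)).

Lemma coolE G t : cool G t = if is_num G then G else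
  if t <= freezing_point G then tilde_cool G t else gnum (frozen_value G).
Proof.
rewrite /frozen_value; case: G => L l Rr r; rewrite /cool /freezing_point /tilde_cool.
case E: (is_num (Gm L l Rr r)); move: (E) => /= -> //.
by move: E => /andP[/andP[/nilP-> /nilP->] /eqP->].
Qed.

Lemma temperatureE G : temperature G = if is_num G then 0 else freezing_point G.
Proof. by case: G => L l Rr r; rewrite /temperature /=; case: ifP. Qed.

Lemma cool_num G t : is_num G -> cool G t = G.
Proof. by rewrite coolE => ->. Qed.

Lemma cool_frozen G t : temperature G < t -> cool G t = gnum (frozen_value G).
Proof.
rewrite coolE temperatureE /frozen_value; case: ifP => [/is_numE//|_ lt_t].
by rewrite leNgt lt_t.
Qed.

Lemma leftopts_tilde_cool G t :
  leftopts (tilde_cool G t) = [seq shift (- t) (cool g t) | g <- leftopts G].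
Proof. by case: G. Qed.

Lemma rightopts_tilde_cool G t :
  rightopts (tilde_cool G t) = [seq shift t (cool g t) | g <- rightopts G].
Proof. by case: G. Qed.

Lemma Ls_tilde_cool_ub G t g : List.In g (leftopts G) ->
  Rs (cool g t) - t <= Ls (tilde_cool G t).
Proof.
move=> g_opt; rewrite -Rs_shift; apply: Ls_ub; rewrite leftopts_tilde_cool.
exact: (List.in_map (fun g => shift (- t) (cool g t))).
Qed.

Lemma Ls_tilde_cool_attained G t : leftopts G <> [::] ->
  exists2 g, List.In g (leftopts G) & Ls (tilde_cool G t) = Rs (cool g t) - t.
Proof.
move=> ne; have [|h] := @Ls_attained _ (tilde_cool G t).
  by rewrite leftopts_tilde_cool; case: (leftopts G) ne.
rewrite leftopts_tilde_cool => /List.in_map_iff[g [<- g_opt]] ->.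
by exists g; rewrite // Rs_shift.
Qed.

Lemma Rs_tilde_cool_lb G t g : List.In g (rightopts G) ->
  Rs (tilde_cool G t) <= Ls (cool g t) + t.
Proof.
move=> g_opt; rewrite -Ls_shift; apply: Rs_lb; rewrite rightopts_tilde_cool.
exact: (List.in_map (fun g => shift t (cool g t))).
Qed.

Lemma Rs_tilde_cool_attained G t : rightopts G <> [::] ->
  exists2 g, List.In g (rightopts G) & Rs (tilde_cool G t) = Ls (cool g t) + t.
Proof.
move=> ne; have [|h] := @Rs_attained _ (tilde_cool G t).
  by rewrite rightopts_tilde_cool; case: (rightopts G) ne.
rewrite rightopts_tilde_cool => /List.in_map_iff[g [<- g_opt]] ->.
by exists g; rewrite // Ls_shift.
Qed.

End Cooling.

Section CoolingSpec.
Variable R : realType.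
Local Notation game := (game R).
Implicit Types (G g h : game) (a s t : R).

Definition cool_lipschitz G := forall s t, 0 <= s -> s <= t ->
  [/\ Ls (cool G t) <= Ls (cool G s), Ls (cool G s) <= Ls (cool G t) + (t - s),
      Rs (cool G s) <= Rs (cool G t) & Rs (cool G t) <= Rs (cool G s) + (t - s)].

Definition options_bounded G := forall t, freezing_point G <= t ->
  (forall g, List.In g (leftopts G) -> Rs (cool g t) - t <= frozen_value G) /\
  (forall g, List.In g (rightopts G) -> frozen_value G <= Ls (cool g t) + t).

(* Bundled because the induction on [G] needs each property for the options. *)
Definition cooling_spec G := [/\ forall t, 0 <= t -> dnz (cool G t),
  cool_lipschitz G, Ls (cool G 0) = Ls G /\ Rs (cool G 0) = Rs G, 0 <= temperature G &
  (forall t, temperature G <= t ->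
     Ls (cool G t) = frozen_value G /\ Rs (cool G t) = frozen_value G) /\
  (~~ is_num G -> options_bounded G)].

Lemma cooling_spec_num G : is_num G -> cooling_spec G.
Proof.
move=> num; have cool_G t : cool G t = G by apply: cool_num.
have RsG : Rs G = Ls G by rewrite (is_numE num).
split.
- by move=> t _; rewrite cool_G (is_numE num); apply: dnz_gnum.
- by move=> s t _ le_st; rewrite !cool_G; split; lra.
- by rewrite cool_G.
- by rewrite temperatureE num.
- split; last by rewrite num.
  by move=> t _; rewrite cool_G /frozen_value num RsG.
Qed.

Section NonNumber.
Variable G : game.
Hypotheses (dnzG : dnz G) (nnumG : ~~ is_num G).
Hypothesis IHL : forall g, List.In g (leftopts G) -> cooling_spec g.
Hypothesis IHR : forall g, List.In g (rightopts G) -> cooling_spec g.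

Local Notation Lc t := (Ls (tilde_cool G t)).
Local Notation Rc t := (Rs (tilde_cool G t)).

Lemma leftopts_neq_nil : leftopts G <> [::].
Proof. by rewrite dnz_leftopts_nil //; apply/negP. Qed.

Lemma rightopts_neq_nil : rightopts G <> [::].
Proof. by rewrite dnz_rightopts_nil //; apply/negP. Qed.

Lemma Ls_tilde_cool_lipschitz s t : 0 <= s -> s <= t -> Lc t <= Lc s /\ Lc s <= Lc t + (t - s).
Proof.
move=> s_ge0 le_st; split.
  have [g g_opt ->] := Ls_tilde_cool_attained t leftopts_neq_nil.
  have [_ lip _ _ _] := IHL g_opt; have [_ _ _ Rs_le] := lip s t s_ge0 le_st.
  by have := Ls_tilde_cool_ub s g_opt; lra.
have [g g_opt ->] := Ls_tilde_cool_attained s leftopts_neq_nil.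
have [_ lip _ _ _] := IHL g_opt; have [_ _ Rs_ge _] := lip s t s_ge0 le_st.
by have := Ls_tilde_cool_ub t g_opt; lra.
Qed.

Lemma Rs_tilde_cool_lipschitz s t : 0 <= s -> s <= t -> Rc s <= Rc t /\ Rc t <= Rc s + (t - s).
Proof.
move=> s_ge0 le_st; split.
  have [g g_opt ->] := Rs_tilde_cool_attained t rightopts_neq_nil.
  have [_ lip _ _ _] := IHR g_opt; have [_ Ls_le _ _] := lip s t s_ge0 le_st.
  by have := Rs_tilde_cool_lb s g_opt; lra.
have [g g_opt ->] := Rs_tilde_cool_attained s rightopts_neq_nil.
have [_ lip _ _ _] := IHR g_opt; have [Ls_ge _ _ _] := lip s t s_ge0 le_st.
by have := Rs_tilde_cool_lb t g_opt; lra.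
Qed.

Lemma Ls_Rs_tilde_cool0 : Lc 0 = Ls G /\ Rc 0 = Rs G.
Proof.
split; apply/le_anti/andP; split.
- have [g g_opt ->] := Ls_tilde_cool_attained 0 leftopts_neq_nil.
  by have [_ _ [_ ->] _ _] := IHL g_opt; rewrite subr0 Ls_ub.
- have [g g_opt ->] := Ls_attained leftopts_neq_nil.
  have [_ _ [_ <-] _ _] := IHL g_opt.
  by rewrite -[X in X <= _]subr0; apply: Ls_tilde_cool_ub.
- have [g g_opt ->] := Rs_attained rightopts_neq_nil.
  have [_ _ [<- _] _ _] := IHR g_opt.
  by rewrite -[X in _ <= X]addr0; apply: Rs_tilde_cool_lb.
- have [g g_opt ->] := Rs_tilde_cool_attained 0 rightopts_neq_nil.
  by have [_ _ [-> _] _ _] := IHR g_opt; rewrite addr0 Rs_lb.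
Qed.

(* Once every option has frozen, [Lc t - Rc t] decreases with slope 2. *)
Lemma tilde_cool_eventually_negative : exists2 t1, 0 <= t1 & Lc t1 - Rc t1 < 0.
Proof.
pose T := \big[Num.max/0]_(g <- leftopts G ++ rightopts G) temperature g + 1.
have T_gt g : List.In g (leftopts G ++ rightopts G) -> temperature g < T.
  by move/(le_bigmax_In (@temperature R)); rewrite /T; lra.
have frozen g t : List.In g (leftopts G ++ rightopts G) -> T <= t -> cool g t = cool g T.
  by move=> g_opt le_Tt; rewrite !cool_frozen // (lt_le_trans (T_gt _ g_opt)).
have T_ge0 : 0 <= T.
  by rewrite /T; have := bigmax_ge0 (@temperature R) (leftopts G ++ rightopts G); lra.
pose t1 := T + `|Lc T - Rc T| + 1.
have le_Tt1 : T <= t1 by rewrite /t1; have := normr_ge0 (Lc T - Rc T); lra.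
exists t1; first exact: le_trans le_Tt1.
have Lc_t1 : Lc t1 <= Lc T - (t1 - T).
  have [g g_opt ->] := Ls_tilde_cool_attained t1 leftopts_neq_nil.
  have := Ls_tilde_cool_ub T g_opt.
  by rewrite (frozen g) ?List.in_app_iff; [lra|left|].
have Rc_t1 : Rc T + (t1 - T) <= Rc t1.
  have [g g_opt ->] := Rs_tilde_cool_attained t1 rightopts_neq_nil.
  have := Rs_tilde_cool_lb T g_opt.
  by rewrite (frozen g) ?List.in_app_iff; [lra|right|].
have t1E : t1 - T = `|Lc T - Rc T| + 1 by rewrite /t1; lra.
by have := ler_norm (Lc T - Rc T); lra.
Qed.

Lemma freezing_pointP :
  0 <= freezing_point G /\ Lc (freezing_point G) = Rc (freezing_point G).
Proof.
have setE : [set t | 0 <= t /\ Lc t = Rc t] = [set t | 0 <= t /\ Lc t - Rc t = 0].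
  apply/seteqP; split=> t [t_ge0 eq_t]; split=> //; first by rewrite eq_t subrr.
  by apply/eqP; rewrite -subr_eq0 eq_t.
have [t1 t1_ge0 Dt1] := tilde_cool_eventually_negative.
have D0 : 0 <= Lc 0 - Rc 0.
  by have [-> ->] := Ls_Rs_tilde_cool0; rewrite subr_ge0 dnz_Rs_le_Ls.
have D_nonincr s t : 0 <= s -> s <= t -> Lc t - Rc t <= Lc s - Rc s.
  move=> s_ge0 le_st; have := Ls_tilde_cool_lipschitz s_ge0 le_st.
  by have := Rs_tilde_cool_lipschitz s_ge0 le_st; lra.
have D_lipschitz s t : 0 <= s -> s <= t -> Lc s - Rc s - 2 * (t - s) <= Lc t - Rc t.
  move=> s_ge0 le_st; have := Ls_tilde_cool_lipschitz s_ge0 le_st.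
  by have := Rs_tilde_cool_lipschitz s_ge0 le_st; lra.
have := first_zero D_nonincr D_lipschitz D0 t1_ge0 Dt1.
rewrite /freezing_point setE /= => -[fp_ge0 D_fp].
by split=> //; apply/eqP; rewrite -subr_eq0 D_fp.
Qed.

Lemma frozen_value_nonnum : frozen_value G = Lc (freezing_point G).
Proof. by rewrite /frozen_value (negbTE nnumG). Qed.

Lemma cool_nonnum t :
  cool G t = if t <= freezing_point G then tilde_cool G t else gnum (frozen_value G).
Proof. by rewrite coolE (negbTE nnumG). Qed.

Lemma Rs_le_Ls_tilde_cool t : 0 <= t -> t <= freezing_point G -> Rc t <= Lc t.
Proof.
move=> t_ge0 le_t; have [_ eq_fp] := freezing_pointP.
have := Ls_tilde_cool_lipschitz t_ge0 le_t; have := Rs_tilde_cool_lipschitz t_ge0 le_t; lra.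
Qed.

Lemma dnz_tilde_cool t : 0 <= t -> t <= freezing_point G -> dnz (tilde_cool G t).
Proof.
move=> t_ge0 le_t; have /dnzE[dic _ _ DL DR] := dnzG; apply/dnzE; split.
- by rewrite leftopts_tilde_cool rightopts_tilde_cool /nilp !size_map.
- exact: Rs_le_Ls_tilde_cool.
- by rewrite leftopts_tilde_cool /nilp size_map; case: (leftopts G) leftopts_neq_nil.
- rewrite leftopts_tilde_cool => _ /List.in_map_iff[g [<- g_opt]].
  by have [dnz_cool _ _ _ _] := IHL g_opt; apply/dnz_shift/dnz_cool.
- rewrite rightopts_tilde_cool => _ /List.in_map_iff[g [<- g_opt]].
  by have [dnz_cool _ _ _ _] := IHR g_opt; apply/dnz_shift/dnz_cool.
Qed.

Lemma cool_lipschitz_nonnum : cool_lipschitz G.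
Proof.
have [fp_ge0 eq_fp] := freezing_pointP.
move=> s t s_ge0 le_st; rewrite !cool_nonnum.
have [le_t|lt_t] := lerP t (freezing_point G).
  rewrite (le_trans le_st le_t).
  have := Ls_tilde_cool_lipschitz s_ge0 le_st; have := Rs_tilde_cool_lipschitz s_ge0 le_st.
  by split; lra.
rewrite frozen_value_nonnum.
have [le_s|lt_s] := lerP s (freezing_point G); last by split; lra.
have := Ls_tilde_cool_lipschitz s_ge0 le_s; have := Rs_tilde_cool_lipschitz s_ge0 le_s.
by split; lra.
Qed.

Lemma Ls_Rs_cool_frozen_nonnum t : freezing_point G <= t ->
  Ls (cool G t) = frozen_value G /\ Rs (cool G t) = frozen_value G.
Proof.
move=> le_t; rewrite cool_nonnum frozen_value_nonnum.
have [ge_t|_] := lerP t (freezing_point G); last by split.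
have -> : t = freezing_point G by apply/le_anti/andP.
by have [_ ->] := freezing_pointP.
Qed.

Lemma options_bounded_nonnum : options_bounded G.
Proof.
have [fp_ge0 eq_fp] := freezing_pointP.
move=> t le_t; rewrite frozen_value_nonnum; split=> g g_opt.
  have := Ls_tilde_cool_ub t g_opt; have := Ls_tilde_cool_lipschitz fp_ge0 le_t; lra.
have := Rs_tilde_cool_lb t g_opt; have := Rs_tilde_cool_lipschitz fp_ge0 le_t; lra.
Qed.

Lemma cooling_spec_nonnum : cooling_spec G.
Proof.
have [fp_ge0 _] := freezing_pointP.
split.
- move=> t t_ge0; rewrite cool_nonnum; case: ifP => [le_t|_]; last exact: dnz_gnum.
  exact: dnz_tilde_cool.
- exact: cool_lipschitz_nonnum.
- by rewrite cool_nonnum fp_ge0; apply: Ls_Rs_tilde_cool0.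
- by rewrite temperatureE (negbTE nnumG).
- split=> [t|_]; last exact: options_bounded_nonnum.
  by rewrite temperatureE (negbTE nnumG); apply: Ls_Rs_cool_frozen_nonnum.
Qed.

End NonNumber.

Lemma cooling_spec_dnz G : dnz G -> cooling_spec G.
Proof.
elim/game_opts_ind: G => G IHL IHR dnzG.
have [num|nnum] := boolP (is_num G); first exact: cooling_spec_num.
apply: cooling_spec_nonnum => // g g_opt.
  exact: IHL g_opt (dnz_leftopt dnzG g_opt).
exact: IHR g_opt (dnz_rightopt dnzG g_opt).
Qed.

Lemma dnz_cool G t : dnz G -> 0 <= t -> dnz (cool G t).
Proof. by move/cooling_spec_dnz=> [+ _ _ _ _]; apply. Qed.

Lemma temperature_ge0 G : dnz G -> 0 <= temperature G.
Proof. by case/cooling_spec_dnz. Qed.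

Lemma Ls_Rs_cool_frozen G t : dnz G -> temperature G <= t ->
  Ls (cool G t) = frozen_value G /\ Rs (cool G t) = frozen_value G.
Proof. by move/cooling_spec_dnz=> [_ _ _ _ [+ _]]; apply. Qed.

Lemma leftopt_cool_le_frozen G g t : dnz G -> ~~ is_num G -> freezing_point G <= t ->
  List.In g (leftopts G) -> Rs (cool g t) - t <= frozen_value G.
Proof. by move=> /cooling_spec_dnz[_ _ _ _ [_ bnd]] /bnd /[apply] -[+ _]; apply. Qed.

Lemma rightopt_cool_ge_frozen G g t : dnz G -> ~~ is_num G -> freezing_point G <= t ->
  List.In g (rightopts G) -> frozen_value G <= Ls (cool g t) + t.
Proof. by move=> /cooling_spec_dnz[_ _ _ _ [_ bnd]] /bnd /[apply] -[_ +]; apply. Qed.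

End CoolingSpec.

(** * Cooling a sum *)

Section CooledSums.
Variable R : realType.
Local Notation game := (game R).
Local Notation shift := (@Defs.shift R).
Implicit Types (g h x : game) (a c t : R) (Hs P Q Y : seq game).

Definition cool_seq t Hs := [seq cool h t | h <- Hs].

Lemma cool_seq_cat t P Q : cool_seq t (P ++ Q) = cool_seq t P ++ cool_seq t Q.
Proof. exact: map_cat. Qed.

Lemma Forall_dnz_cool_seq t Hs : 0 <= t -> List.Forall dnz Hs -> List.Forall dnz (cool_seq t Hs).
Proof.
move=> t_ge0 /List.Forall_forall DHs; apply/List.Forall_forall => _ /List.in_map_iff[h [<- h_in]].
exact: dnz_cool (DHs h h_in) t_ge0.
Qed.

Lemma map_eq_cat_cons (f : game -> game) Hs P x Q : map f Hs = P ++ x :: Q ->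
  exists P0 h Q0, [/\ Hs = P0 ++ h :: Q0, P = map f P0, x = f h & Q = map f Q0].
Proof.
elim: P Hs => [|y P IH] [|h Hs] //= [eq_h eq_Hs]; first by exists [::], h, Hs.
have [P0 [h' [Q0 [-> -> -> ->]]]] := IH _ eq_Hs.
by exists (h :: P0), h', Q0; rewrite -eq_h.
Qed.

Lemma cool_leftopt h t g : List.In g (leftopts (cool h t)) -> cool h t = tilde_cool h t.
Proof.
rewrite coolE; case: ifP => [/is_num_opts[-> _] //|_].
by case: ifP.
Qed.

Lemma cool_rightopt h t g : List.In g (rightopts (cool h t)) -> cool h t = tilde_cool h t.
Proof.
rewrite coolE; case: ifP => [/is_num_opts[_ ->] //|_].
by case: ifP.
Qed.

Lemma cool_seq_sum_step_left t Hs Y : sum_step (@leftopts R) (cool_seq t Hs) Y ->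
  exists2 Hs', sum_step (@leftopts R) Hs Hs' &
    Rs (sum_games Y) = Rs (sum_games (cool_seq t Hs')) - t.
Proof.
case/sum_step_split=> P [x [x' [Q [/map_eq_cat_cons[P0 [h [Q0 [-> -> -> ->]]]] -> x'_opt]]]].
move: (x'_opt); rewrite (cool_leftopt x'_opt) leftopts_tilde_cool.
case/List.in_map_iff=> g [<- g_opt].
exists (P0 ++ g :: Q0); first exact: sum_step_mid.
by rewrite (Ls_Rs_sum_shift_mid _ _ _ _).2 cool_seq_cat.
Qed.

Lemma cool_seq_sum_step_right t Hs Y : sum_step (@rightopts R) (cool_seq t Hs) Y ->
  exists2 Hs', sum_step (@rightopts R) Hs Hs' &
    Ls (sum_games Y) = Ls (sum_games (cool_seq t Hs')) + t.
Proof.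
case/sum_step_split=> P [x [x' [Q [/map_eq_cat_cons[P0 [h [Q0 [-> -> -> ->]]]] -> x'_opt]]]].
move: (x'_opt); rewrite (cool_rightopt x'_opt) rightopts_tilde_cool.
case/List.in_map_iff=> g [<- g_opt].
exists (P0 ++ g :: Q0); first exact: sum_step_mid.
by rewrite (Ls_Rs_sum_shift_mid _ _ _ _).1 cool_seq_cat.
Qed.

Lemma Rs_sum_cool_seq_step_left t Hs Hs' : 0 <= t -> List.Forall dnz Hs ->
  sum_step (@leftopts R) Hs Hs' ->
  Rs (sum_games (cool_seq t Hs')) <= Ls (sum_games (cool_seq t Hs)) + t.
Proof.
move=> t_ge0 DHs /sum_step_split[P [h [g [Q [eHs -> g_opt]]]]]; subst Hs.
have [DP /List.Forall_cons_iff[Dh DQ]] := (List.Forall_app _ _ _).1 DHs.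
have nnum_h : ~~ is_num h by apply/negP; rewrite -dnz_leftopts_nil //; case: (leftopts h) g_opt.
rewrite !cool_seq_cat /= [cool h t]coolE (negbTE nnum_h).
have [le_t|lt_t] := lerP t (freezing_point h).
  have st : sum_step (@leftopts R) (cool_seq t P ++ tilde_cool h t :: cool_seq t Q)
      (cool_seq t P ++ shift (- t) (cool g t) :: cool_seq t Q).
    apply: sum_step_mid; rewrite leftopts_tilde_cool.
    exact: (List.in_map (fun g => shift (- t) (cool g t))).
  by have := Ls_sum_ub st; rewrite (Ls_Rs_sum_shift_mid _ _ _ _).2; lra.
have [-> _] := Ls_Rs_sum_gnum_mid (frozen_value h) (cool_seq t P) (cool_seq t Q).
have [_ ->] := Ls_Rs_sum_front (cool_seq t P) (cool g t) (cool_seq t Q).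
have Dg : List.Forall dnz [:: cool g t].
  by constructor=> //; apply: dnz_cool t_ge0; apply: dnz_leftopt g_opt.
have DPQ : List.Forall dnz (cool_seq t P ++ cool_seq t Q).
  by rewrite -cool_seq_cat; apply: Forall_dnz_cool_seq t_ge0 _; apply/List.Forall_app.
have := Rs_sum_cat_le Dg DPQ.
by have := leftopt_cool_le_frozen Dh nnum_h (ltW lt_t) g_opt; rewrite /=; lra.
Qed.

Lemma Ls_sum_cool_seq_step_right t Hs Hs' : 0 <= t -> List.Forall dnz Hs ->
  sum_step (@rightopts R) Hs Hs' ->
  Rs (sum_games (cool_seq t Hs)) - t <= Ls (sum_games (cool_seq t Hs')).
Proof.
move=> t_ge0 DHs /sum_step_split[P [h [g [Q [eHs -> g_opt]]]]]; subst Hs.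
have [DP /List.Forall_cons_iff[Dh DQ]] := (List.Forall_app _ _ _).1 DHs.
have nnum_h : ~~ is_num h.
  by apply/negP; rewrite -dnz_rightopts_nil //; case: (rightopts h) g_opt.
rewrite !cool_seq_cat /= [cool h t]coolE (negbTE nnum_h).
have [le_t|lt_t] := lerP t (freezing_point h).
  have st : sum_step (@rightopts R) (cool_seq t P ++ tilde_cool h t :: cool_seq t Q)
      (cool_seq t P ++ shift t (cool g t) :: cool_seq t Q).
    apply: sum_step_mid; rewrite rightopts_tilde_cool.
    exact: (List.in_map (fun g => shift t (cool g t))).
  by have := Rs_sum_lb st; rewrite (Ls_Rs_sum_shift_mid _ _ _ _).1; lra.
have [_ ->] := Ls_Rs_sum_gnum_mid (frozen_value h) (cool_seq t P) (cool_seq t Q).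
have [-> _] := Ls_Rs_sum_front (cool_seq t P) (cool g t) (cool_seq t Q).
have Dg : List.Forall dnz [:: cool g t].
  by constructor=> //; apply: dnz_cool t_ge0; apply: dnz_rightopt g_opt.
have DPQ : List.Forall dnz (cool_seq t P ++ cool_seq t Q).
  by rewrite -cool_seq_cat; apply: Forall_dnz_cool_seq t_ge0 _; apply/List.Forall_app.
have := Ls_sum_cat_ge Dg DPQ.
by have := rightopt_cool_ge_frozen Dh nnum_h (ltW lt_t) g_opt; rewrite /=; lra.
Qed.

Lemma cool_seq_numbers t Hs : List.Forall dnz Hs -> no_opts (@leftopts R) Hs ->
  cool_seq t Hs = Hs.
Proof.
move=> /List.Forall_forall DHs no; rewrite -[RHS]map_id; apply: List.map_ext_in => h h_in.
by rewrite cool_num // -(dnz_leftopts_nil (DHs h h_in)); apply: no.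
Qed.

End CooledSums.

Section CoolingBounds.
Variable R : realType.
Local Notation game := (game R).
Local Notation shift := (@Defs.shift R).
Implicit Types (g h x : game) (a c t : R) (Hs P Q Y : seq game).

Lemma temperature_le_of_cool_num h t : dnz h -> 0 <= t -> is_num (cool h t) ->
  temperature h <= t.
Proof.
move=> Dh t_ge0; rewrite temperatureE coolE; case: ifP => // nnum.
have ne := leftopts_neq_nil Dh (negbT nnum).
case: ifP => [_|/negbT]; last by rewrite -ltNge => /ltW.
by move/is_num_opts=> []; rewrite leftopts_tilde_cool; case: (leftopts h) ne.
Qed.

Lemma temperatures_le_of_no_opts t Hs : List.Forall dnz Hs -> 0 <= t ->
  no_opts (@leftopts R) (cool_seq t Hs) -> forall h, List.In h Hs -> temperature h <= t.
Proof.
move=> DHs t_ge0 no h h_in; have Dh := (List.Forall_forall _ _).1 DHs h h_in.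
have Dcool := dnz_cool Dh t_ge0.
apply: temperature_le_of_cool_num Dh t_ge0 _.
rewrite -(dnz_leftopts_nil Dcool); apply: no.
exact: (List.in_map (fun h => cool h t)).
Qed.

Lemma sum_step_nonnum o Hs Hs' : (forall a, o (gnum a) = [::]) -> sum_step o Hs Hs' ->
  exists2 h, List.In h Hs & ~~ is_num h.
Proof.
move=> o_gnum /sum_step_split[P [h [h' [Q [-> _ h'_opt]]]]].
exists h; first by apply/List.in_app_iff; right; left.
by apply/negP => /is_numE eq_h; move: h'_opt; rewrite eq_h o_gnum.
Qed.

(* At the freezing point of its hottest non-number component, a cooled sum still has
   moves for both players. *)
Lemma hottest_component_live Hs : List.Forall dnz Hs -> (exists2 h, List.In h Hs & ~~ is_num h) ->
  exists t', [/\ 0 <= t', forall h, List.In h Hs -> temperature h <= t',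
    exists Y, sum_step (@leftopts R) (cool_seq t' Hs) Y &
    exists Y, sum_step (@rightopts R) (cool_seq t' Hs) Y].
Proof.
move=> DHs ex_nnum; have /List.Forall_forall DHs' := DHs.
have [m [m_in nnum_m m_max]] := exists_argmax_In (@freezing_point R) ex_nnum.
have Dm := DHs' m m_in; set tm := freezing_point m.
have tm_ge0 : 0 <= tm by have := temperature_ge0 Dm; rewrite temperatureE (negbTE nnum_m).
have [P [Q eHs]] := List.in_split _ _ m_in.
have cool_m : cool m tm = tilde_cool m tm by rewrite coolE (negbTE nnum_m) lexx.
exists tm; split=> //.
- move=> h h_in; rewrite temperatureE; case: ifP => [//|/negbT nnum_h].
  exact: m_max.
- rewrite eHs cool_seq_cat /= cool_m.
  case E: (leftopts m) (leftopts_neq_nil Dm nnum_m) => [//|g L] _.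
  exists (cool_seq tm P ++ shift (- tm) (cool g tm) :: cool_seq tm Q).
  by apply: sum_step_mid; rewrite leftopts_tilde_cool E; left.
- rewrite eHs cool_seq_cat /= cool_m.
  case E: (rightopts m) (rightopts_neq_nil Dm nnum_m) => [//|g L] _.
  exists (cool_seq tm P ++ shift tm (cool g tm) :: cool_seq tm Q).
  by apply: sum_step_mid; rewrite rightopts_tilde_cool E; left.
Qed.

Definition cooling_bounds t Hs := [/\
  Ls (sum_games (cool_seq t Hs)) <= Ls (sum_games Hs),
  Ls (sum_games Hs) <= Ls (sum_games (cool_seq t Hs)) + t,
  Rs (sum_games Hs) <= Rs (sum_games (cool_seq t Hs)) &
  Rs (sum_games (cool_seq t Hs)) - t <= Rs (sum_games Hs)].

Section AboveTemperatures.
Variables (t : R) (Hs : seq game).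
Hypotheses (DHs : List.Forall dnz Hs) (temp_le : forall h, List.In h Hs -> temperature h <= t).

Lemma sum_cool_seq_frozen :
  \sum_(x <- cool_seq t Hs) Ls x = \sum_(h <- Hs) frozen_value h /\
  \sum_(x <- cool_seq t Hs) Rs x = \sum_(h <- Hs) frozen_value h.
Proof.
have /List.Forall_forall DHs' := DHs.
rewrite !big_map; split; apply: eq_big_In => h h_in;
  have [eL eR] := Ls_Rs_cool_frozen (DHs' h h_in) (temp_le h_in); [exact: eL|exact: eR].
Qed.

Lemma cool_seq_settled x : List.In x (cool_seq t Hs) -> Ls x = Rs x.
Proof.
have /List.Forall_forall DHs' := DHs.
case/List.in_map_iff=> h [<- h_in].
by have [-> ->] := Ls_Rs_cool_frozen (DHs' h h_in) (temp_le h_in).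
Qed.

End AboveTemperatures.

Section InductionStep.
Variable Hs : seq game.
Hypothesis DHs : List.Forall dnz Hs.
Hypothesis IHL : forall Hs', sum_step (@leftopts R) Hs Hs' ->
  forall t, 0 <= t -> cooling_bounds t Hs'.
Hypothesis IHR : forall Hs', sum_step (@rightopts R) Hs Hs' ->
  forall t, 0 <= t -> cooling_bounds t Hs'.

Lemma Ls_sum_cool_le_of_step t Y : 0 <= t -> sum_step (@leftopts R) (cool_seq t Hs) Y ->
  Ls (sum_games (cool_seq t Hs)) <= Ls (sum_games Hs).
Proof.
move=> t_ge0 st0; have [Y' st ->] := Ls_sum_attained st0.
have [Hs' st' ->] := cool_seq_sum_step_left st.
have [_ _ _ bnd] := IHL st' t_ge0.
by have := Ls_sum_ub st'; lra.
Qed.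

Lemma Rs_sum_cool_ge_of_step t Y : 0 <= t -> sum_step (@rightopts R) (cool_seq t Hs) Y ->
  Rs (sum_games Hs) <= Rs (sum_games (cool_seq t Hs)).
Proof.
move=> t_ge0 st0; have [Y' st ->] := Rs_sum_attained st0.
have [Hs' st' ->] := cool_seq_sum_step_right st.
have [_ bnd _ _] := IHR st' t_ge0.
by have := Rs_sum_lb st'; lra.
Qed.

Lemma Ls_sum_le_cool t : 0 <= t -> Ls (sum_games Hs) <= Ls (sum_games (cool_seq t Hs)) + t.
Proof.
move=> t_ge0; case: (no_opts_or_sum_step (@leftopts R) Hs) => [no|[Hs0 st0]].
  by rewrite cool_seq_numbers //; lra.
have [Hs' st ->] := Ls_sum_attained st0.
have [_ _ bnd _] := IHL st t_ge0.
by have := Rs_sum_cool_seq_step_left t_ge0 DHs st; lra.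
Qed.

Lemma Rs_sum_cool_le t : 0 <= t -> Rs (sum_games (cool_seq t Hs)) - t <= Rs (sum_games Hs).
Proof.
move=> t_ge0; case: (no_opts_or_sum_step (@rightopts R) Hs) => [no|[Hs0 st0]].
  by rewrite cool_seq_numbers //; [lra|apply/(dnz_no_opts DHs)].
have [Hs' st ->] := Rs_sum_attained st0.
have [bnd _ _ _] := IHR st t_ge0.
by have := Ls_sum_cool_seq_step_right t_ge0 DHs st; lra.
Qed.

Lemma Ls_sum_cool_le t : 0 <= t -> Ls (sum_games (cool_seq t Hs)) <= Ls (sum_games Hs).
Proof.
move=> t_ge0.
case: (no_opts_or_sum_step (@leftopts R) (cool_seq t Hs)) => [noC|[Y st]];
  last exact: Ls_sum_cool_le_of_step st.
case: (no_opts_or_sum_step (@leftopts R) Hs) => [noH|[Hs1 st1]].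
  by rewrite cool_seq_numbers.
(* The cooled sum is a number; compare it with the sum cooled to the hottest freezing
   point, which still has a left move. *)
have [t' [t'_ge0 temp_t' [Y st'] _]] :=
  hottest_component_live DHs (sum_step_nonnum (fun=> erefl) st1).
apply: le_trans (Ls_sum_cool_le_of_step t'_ge0 st').
have temp_t := temperatures_le_of_no_opts DHs t_ge0 noC.
rewrite Ls_sum_no_opts // (sum_cool_seq_frozen DHs temp_t).1.
rewrite -(sum_cool_seq_frozen DHs temp_t').1.
apply: sum_Ls_le_Ls_sum; first exact: Forall_dnz_cool_seq.
exact: cool_seq_settled.
Qed.

Lemma Rs_sum_le_cool t : 0 <= t -> Rs (sum_games Hs) <= Rs (sum_games (cool_seq t Hs)).
Proof.
move=> t_ge0; have DC := Forall_dnz_cool_seq t_ge0 DHs.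
case: (no_opts_or_sum_step (@rightopts R) (cool_seq t Hs)) => [noC|[Y st]];
  last exact: Rs_sum_cool_ge_of_step st.
case: (no_opts_or_sum_step (@rightopts R) Hs) => [noH|[Hs1 st1]].
  by rewrite cool_seq_numbers //; apply/(dnz_no_opts DHs).
have [t' [t'_ge0 temp_t' _ [Y st']]] :=
  hottest_component_live DHs (sum_step_nonnum (fun=> erefl) st1).
apply: le_trans (Rs_sum_cool_ge_of_step t'_ge0 st') _.
have temp_t := temperatures_le_of_no_opts DHs t_ge0 ((dnz_no_opts DC).2 noC).
rewrite (Rs_sum_no_opts noC) (sum_cool_seq_frozen DHs temp_t).2.
rewrite -(sum_cool_seq_frozen DHs temp_t').2.
apply: Rs_sum_le_sum_Rs; first exact: Forall_dnz_cool_seq.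
exact: cool_seq_settled.
Qed.

End InductionStep.

Lemma cooling_bounds_dnz Hs : List.Forall dnz Hs -> forall t, 0 <= t -> cooling_bounds t Hs.
Proof.
move=> DHs; have [n] := ubnP (lsize Hs); elim: n Hs DHs => // n IH Hs DHs /ltnSE le_Hs.
have IHL Hs' : sum_step (@leftopts R) Hs Hs' -> forall t, 0 <= t -> cooling_bounds t Hs'.
  move=> st; apply: IH (Forall_dnz_sum_step_left DHs st) _.
  by move: (lsize_sum_step (@gsize_leftopt R) st); lia.
have IHR Hs' : sum_step (@rightopts R) Hs Hs' -> forall t, 0 <= t -> cooling_bounds t Hs'.
  move=> st; apply: IH (Forall_dnz_sum_step_right DHs st) _.
  by move: (lsize_sum_step (@gsize_rightopt R) st); lia.
move=> t t_ge0; split.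
- exact: Ls_sum_cool_le.
- exact: Ls_sum_le_cool.
- exact: Rs_sum_le_cool.
- exact: Rs_sum_cool_le.
Qed.

End CoolingBounds.

(** * Means *)

Section Mean.
Variable R : realType.
Local Notation game := (game R).
Implicit Types (g h : game) (t : R) (Hs : seq game).

Lemma sum_games_above_temperatures t Hs : List.Forall dnz Hs -> 0 <= t ->
  (forall h, List.In h Hs -> temperature h < t) ->
  let m := \sum_(h <- Hs) frozen_value h in
  [/\ m <= Ls (sum_games Hs), Ls (sum_games Hs) <= m + t,
      Rs (sum_games Hs) <= m & m - t <= Rs (sum_games Hs)].
Proof.
move=> DHs t_ge0 temp_lt m.
have temp_le h : List.In h Hs -> temperature h <= t by move/temp_lt/ltW.
have no : no_opts (@leftopts R) (cool_seq t Hs).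
  by move=> _ /List.in_map_iff[h [<- /temp_lt/cool_frozen ->]].
have DC := Forall_dnz_cool_seq t_ge0 DHs.
have eL : Ls (sum_games (cool_seq t Hs)) = m.
  by rewrite Ls_sum_no_opts // (sum_cool_seq_frozen DHs temp_le).1.
have eR : Rs (sum_games (cool_seq t Hs)) = m.
  by rewrite Rs_sum_no_opts ?(sum_cool_seq_frozen DHs temp_le).2 //; apply/(dnz_no_opts DC).
have [] := cooling_bounds_dnz DHs t_ge0; rewrite eL eR.
by split.
Qed.

Lemma gmul_sum_games n g : gmul n g = sum_games (nseq n g).
Proof. by elim: n => [|[|n] IH] //; rewrite -[gmul _ _]/(gsum g (gmul n.+1 g)) IH. Qed.

Lemma mean_frozen_value g : dnz g -> mean g = frozen_value g.
Proof.
move=> Dg; pose t := temperature g + 1.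
have t_gt0 : 0 < t by have := temperature_ge0 Dg; rewrite /t; lra.
apply: (limn_div_of_bounded t_gt0) => n.
have Dn : List.Forall dnz (nseq n g) by elim: n => //= n IH; constructor.
have temp_lt h : List.In h (nseq n g) -> temperature h < t.
  by elim: n {Dn} => //= n IH [<-|/IH //]; rewrite /t ltrDl.
have [lo hi _ _] := sum_games_above_temperatures Dn (ltW t_gt0) temp_lt.
have sum_nseq : \sum_(h <- nseq n g) frozen_value h = frozen_value g *+ n.
  by rewrite big_nseq iter_addr addr0.
by rewrite gmul_sum_games -sum_nseq lo hi.
Qed.

End Mean.

Theorem mainTheorem6 (R : realType) (Gs : seq (game R)) :
  Gs <> [::] ->
  (forall i, (i < size Gs)%N ->
     let g := nth (gnum (0 : R)) Gs i in dicotic g /\ nonzugzwang g /\ terminal_numbers g) ->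
  let G := sum_games Gs in
  let m := \sum_(g <- Gs) mean g in
  let sigma := \big[Num.max/(0 : R)]_(g <- Gs) temperature g in
  m - sigma <= Rs G /\ Rs G <= m /\ m <= Ls G /\ Ls G <= m + sigma.
Proof.
move=> _ dnz_nth G m sigma.
have DGs : List.Forall dnz Gs.
  by apply/List.Forall_forall => g /(In_nth (gnum 0))[i lt_i <-]; apply: dnz_nth.
have mE : m = \sum_(g <- Gs) frozen_value g.
  by apply: eq_big_In => g g_in; apply/mean_frozen_value/(List.Forall_forall _ _).1/g_in.
have sigma_ge0 : 0 <= sigma := bigmax_ge0 _ _.
have bounds e : 0 < e -> [/\ m <= Ls G, Ls G <= m + (sigma + e),
    Rs G <= m & m - (sigma + e) <= Rs G].
  move=> e_gt0; rewrite mE; apply: sum_games_above_temperatures DGs _ _; first lra.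
  by move=> g /(le_bigmax_In (@temperature R)); rewrite -/sigma; lra.
have [Ls_ge _ Rs_le _] := bounds 1 ltr01.
split; first by apply/ler_addgt0Pr => e /bounds[_ _ _]; lra.
do 2!split=> //.
by apply/ler_addgt0Pr => e /bounds[_ + _ _]; lra.
Qed.
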